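(* Let $f:\mathbb{R}^n\to\mathbb{R}^l$ be continuously differentiable, let $C\subset\mathbb{R}^l$ be closed and subamenable at $f(\bar x)\in C$, and suppose $F(x):=f(x)-C$ is metrically subregular at $(\bar x,0)$. Then $$\operatorname{subreg}F(\bar x,0)=\limsup_{x\to\bar x,\ x\in f^{-1}(C)}\ \sup_{v\in N_{f^{-1}(C)}(x)\cap\mathbb{B}_{\mathbb{R}^n}}\inf\{\|\lambda\|:\lambda\in N_C(f(x)),\ \nabla f(x)^T\lambda=v\}$$ $$=\limsup_{x\to\bar x,\ x\in f^{-1}(C)}\inf\{\tau\ge0: N_{f^{-1}(C)}(x)\cap\mathbb{B}_{\mathbb{R}^n}\subset\tau\,\nabla f(x)^T(N_C(f(x))\cap\mathbb{B}_{\mathbb{R}^l})\}$$ $$=\limsup_{x\to\bar x,\ x\in f^{-1}(C)}\inf\{\tau\ge0: N_{f^{-1}(C)}(x)\cap\mathbb{B}_{\mathbb{R}^n}\subset\tau\,D^*F(x,0)(\mathbb{B}_{\mathbb{R}^l})\},$$ where $D^*F(x,0)(\lambda):=\{\nabla f(x)^T\lambda\}$ if $\lambda\in N_C(f(x))$ and $D^*F(x,0)(\lambda):=\emptyset$ otherwise.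
   Context: $\operatorname{subreg}F(\bar x,0)$ is the infimum of all $\kappa\ge0$ for which there is a neighborhood $U$ of $\bar x$ with $\operatorname{dist}(x;f^{-1}(C))\le\kappa\operatorname{dist}(f(x);C)$ for all $x\in U$ (metric subregularity of $F$ at $(\bar x,0)$ means some such $\kappa$ exists). $N$ denotes the limiting normal cone; $\mathbb{B}$ the closed unit ball; $\limsup_{x\to\bar x,x\in S}h(x)=\lim_{\varepsilon\downarrow0}\sup\{h(x):x\in S,\|x-\bar x\|<\varepsilon\}$; $\inf\emptyset=+\infty$. A set $C$ is subamenable at $\bar z\in C$ if there are a neighborhood $W$ of $\bar z$, a $\mathcal C^1$ map $q:W\to\mathbb{R}^d$ and a closed convex set $Q\subset\mathbb{R}^d$ with $C\cap W=\{z\in W: q(z)\in Q\}$ and $z\mapsto q(z)-Q$ metrically subregular at $(\bar z,0)$. *)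

From Stdlib Require Import Reals Lra Classical ClassicalEpsilon FunctionalExtensionality.
From Stdlib Require Fin.
Open Scope R_scope.

Definition vec (n : nat) := Fin.t n -> R.
Definition mat (l n : nat) := Fin.t l -> Fin.t n -> R.

Fixpoint sumF (n : nat) : (Fin.t n -> R) -> R :=
  match n return (Fin.t n -> R) -> R with
  | O => fun _ => 0
  | S m => fun g => g (@Fin.F1 m) + sumF m (fun i => g (Fin.FS i))
  end.

Definition vadd {n} (x y : vec n) : vec n := fun i => x i + y i.
Definition vsub {n} (x y : vec n) : vec n := fun i => x i - y i.
Definition vscal {n} (a : R) (x : vec n) : vec n := fun i => a * x i.
Definition inner {n} (x y : vec n) : R := sumF n (fun i => x i * y i).
Definition vnorm {n} (x : vec n) : R := sqrt (inner x x).

Definition mapply {l n} (A : mat l n) (x : vec n) : vec l :=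
  fun i => sumF n (fun j => A i j * x j).
Definition mtapply {l n} (A : mat l n) (y : vec l) : vec n :=
  fun j => sumF l (fun i => A i j * y i).

Inductive Rbar := Finite (r : R) | p_infty | m_infty.

Definition Rbar_le (a b : Rbar) : Prop :=
  match a, b with
  | m_infty, _ => True
  | _, p_infty => True
  | Finite x, Finite y => x <= y
  | _, _ => False
  end.

Definition is_lub_Rbar (E : Rbar -> Prop) (s : Rbar) : Prop :=
  (forall x, E x -> Rbar_le x s) /\
  (forall u, (forall x, E x -> Rbar_le x u) -> Rbar_le s u).
Definition is_glb_Rbar (E : Rbar -> Prop) (s : Rbar) : Prop :=
  (forall x, E x -> Rbar_le s x) /\
  (forall u, (forall x, E x -> Rbar_le u x) -> Rbar_le u s).

(* sup / inf in the extended reals (inf of the empty set is +oo) *)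
Definition Rbar_sup (E : Rbar -> Prop) : Rbar :=
  epsilon (inhabits p_infty) (is_lub_Rbar E).
Definition Rbar_inf (E : Rbar -> Prop) : Rbar :=
  epsilon (inhabits p_infty) (is_glb_Rbar E).

(* scaling by a nonnegative real kappa *)
Definition Rbar_scal (k : R) (a : Rbar) : Rbar :=
  match a with
  | Finite x => Finite (k * x)
  | p_infty => p_infty
  | m_infty => m_infty
  end.

Definition is_open {n} (W : vec n -> Prop) : Prop :=
  forall z, W z -> exists r, 0 < r /\ forall y, vnorm (vsub y z) < r -> W y.

Definition seq_conv {n} (u : nat -> vec n) (x : vec n) : Prop :=
  forall eps, 0 < eps -> exists N, forall k, (N <= k)%nat -> vnorm (vsub (u k) x) < eps.

Definition is_closed {n} (S : vec n -> Prop) : Prop :=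
  forall (u : nat -> vec n) x, (forall k, S (u k)) -> seq_conv u x -> S x.

Definition is_convex {n} (S : vec n -> Prop) : Prop :=
  forall x y t, S x -> S y -> 0 <= t <= 1 ->
    S (vadd (vscal t x) (vscal (1 - t) y)).

Definition dist {n} (x : vec n) (S : vec n -> Prop) : Rbar :=
  Rbar_inf (fun t => exists y, S y /\ t = Finite (vnorm (vsub x y))).

Definition reg_normal {n} (S : vec n -> Prop) (x v : vec n) : Prop :=
  S x /\ forall eps, 0 < eps -> exists delta, 0 < delta /\
    forall y, S y -> vnorm (vsub y x) < delta ->
      inner v (vsub y x) <= eps * vnorm (vsub y x).

(* limiting (Mordukhovich) normal cone N_S(x); empty if x is not in S *)
Definition lim_normal {n} (S : vec n -> Prop) (x v : vec n) : Prop :=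
  S x /\ exists (xk vk : nat -> vec n),
    (forall k, S (xk k)) /\ seq_conv xk x /\ seq_conv vk v /\
    (forall k, reg_normal S (xk k) (vk k)).

Definition C1_on {n m} (W : vec n -> Prop) (g : vec n -> vec m) (Dg : vec n -> mat m n) : Prop :=
  (forall x, W x -> forall eps, 0 < eps -> exists delta, 0 < delta /\
     forall y, vnorm (vsub y x) < delta ->
       vnorm (vsub (vsub (g y) (g x)) (mapply (Dg x) (vsub y x))) <= eps * vnorm (vsub y x)) /\
  (forall x, W x -> forall eps, 0 < eps -> exists delta, 0 < delta /\
     forall y, W y -> vnorm (vsub y x) < delta ->
       forall i j, Rabs (Dg y i j - Dg x i j) < eps).

Definition is_C1 {n m} (g : vec n -> vec m) (Dg : vec n -> mat m n) : Prop :=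
  C1_on (fun _ => True) g Dg.

Definition preimage {n m} (g : vec n -> vec m) (K : vec m -> Prop) : vec n -> Prop :=
  fun x => K (g x).

Definition subreg_bound {n m} (g : vec n -> vec m) (D : vec n -> Prop) (K : vec m -> Prop)
    (xb : vec n) (kappa : R) : Prop :=
  exists delta, 0 < delta /\ forall x, vnorm (vsub x xb) < delta ->
    Rbar_le (dist x (fun y => D y /\ K (g y))) (Rbar_scal kappa (dist (g x) K)).

(* metric subregularity of x |-> g(x) - K (g restricted to D) at (xb, 0) *)
Definition metric_subregular {n m} (g : vec n -> vec m) (D : vec n -> Prop)
    (K : vec m -> Prop) (xb : vec n) : Prop :=
  exists kappa, 0 <= kappa /\ subreg_bound g D K xb kappa.

Definition subreg_modulus {n l} (f : vec n -> vec l) (C : vec l -> Prop) (xb : vec n) : Rbar :=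
  Rbar_inf (fun t => exists kappa, t = Finite kappa /\ 0 <= kappa /\
                     subreg_bound f (fun _ => True) C xb kappa).

Definition subamenable {l} (C : vec l -> Prop) (zb : vec l) : Prop :=
  C zb /\
  exists (W : vec l -> Prop) (d : nat) (q : vec l -> vec d) (Dq : vec l -> mat d l)
         (Q : vec d -> Prop),
    is_open W /\ W zb /\ C1_on W q Dq /\ is_closed Q /\ is_convex Q /\
    (forall z, W z -> (C z <-> Q (q z))) /\
    metric_subregular q W Q zb.

(* limsup_{x -> xb, x in S} h(x) = lim_{eps -> 0+} sup {h x : x in S, |x - xb| < eps};
   the sup is nonincreasing in eps, so this limit is the inf over eps > 0. *)
Definition limsup_at {n} (S : vec n -> Prop) (xb : vec n) (h : vec n -> Rbar) : Rbar :=
  Rbar_inf (fun t => exists eps, 0 < eps /\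
    t = Rbar_sup (fun s => exists x, S x /\ vnorm (vsub x xb) < eps /\ s = h x)).

Definition coderivF {n l} (f : vec n -> vec l) (Df : vec n -> mat l n) (C : vec l -> Prop)
    (x : vec n) (lam : vec l) (w : vec n) : Prop :=
  lim_normal C (f x) lam /\ w = mtapply (Df x) lam.

Definition h1 {n l} (f : vec n -> vec l) (Df : vec n -> mat l n) (C : vec l -> Prop)
    (x : vec n) : Rbar :=
  Rbar_sup (fun s => exists v, lim_normal (preimage f C) x v /\ vnorm v <= 1 /\
    s = Rbar_inf (fun t => exists lam, lim_normal C (f x) lam /\
                     mtapply (Df x) lam = v /\ t = Finite (vnorm lam))).

Definition h2 {n l} (f : vec n -> vec l) (Df : vec n -> mat l n) (C : vec l -> Prop)
    (x : vec n) : Rbar :=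
  Rbar_inf (fun t => exists tau, t = Finite tau /\ 0 <= tau /\
    forall v, lim_normal (preimage f C) x v -> vnorm v <= 1 ->
      exists lam, lim_normal C (f x) lam /\ vnorm lam <= 1 /\
                  v = vscal tau (mtapply (Df x) lam)).

Definition h3 {n l} (f : vec n -> vec l) (Df : vec n -> mat l n) (C : vec l -> Prop)
    (x : vec n) : Rbar :=
  Rbar_inf (fun t => exists tau, t = Finite tau /\ 0 <= tau /\
    forall v, lim_normal (preimage f C) x v -> vnorm v <= 1 ->
      exists lam w, vnorm lam <= 1 /\ coderivF f Df C x lam w /\ v = vscal tau w).

(** Both inequalities reduce to representing limiting normals [v] of [f^-1(C)] as [Df(x)^T lam]
    with [lam] normal to [C].

    If [kappa] is a subregularity modulus, a regular normal [v] at [x] makes the defect [-<v, y - x> + e |y - x|]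
    locally nonnegative on [f^-1(C)], hence bounded below by [-(|v| + e) kappa d_C(f y)] near [x].
    Minimizing the defect plus a smoothed version of this exact penalty plus [|y - x|^2] yields,
    through the first-order condition at the minimizer, [v ~ Df(y)^T mu] with [mu] a proximal
    normal to [C] near [f x] and [|mu| <= (|v| + e) kappa]; compactness passes this to limiting
    normals exactly.

    Conversely, if unit normals near [xb] are represented with [|lam| <= kappa1], take [x] near
    [xb] and a nearest point [p] of [f^-1(C)]: the unit proximal normal [(x - p)/|x - p|] equals
    [Df(p)^T lam]. Subamenability (through the same representation for the convex set [Q]) makes
    [C] almost convex for bounded normals, [<lam, u - f p> <= kappa1 d_C(u) + o(|u - f p|)];
    with [u = f x] and a first-order expansion of [f] this gives [|x - p| <= kappa2 d_C(f x)] for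
    every [kappa2 > kappa1].

    The three inner quantities agree pointwise since multipliers can be rescaled. *)

From Pilot Require Import Defs.
From Stdlib Require Import Reals Lra Lia Classical ClassicalEpsilon FunctionalExtensionality PropExtensionality.
From Stdlib Require Fin.
(* [Reals] exports its own [dist]; re-importing [Defs] makes [dist] the point-to-set distance. *)
Import Defs.
Open Scope R_scope.

(** * Finite sums and Euclidean geometry *)

Lemma sumF_ext n (f g : Fin.t n -> R) : (forall i, f i = g i) -> sumF n f = sumF n g.
Proof.
  revert f g; induction n; simpl; intros f g H; [reflexivity|].
  rewrite H, (IHn (fun i => f (Fin.FS i)) (fun i => g (Fin.FS i))); auto.
Qed.

Lemma sumF_plus n (f g : Fin.t n -> R) : sumF n (fun i => f i + g i) = sumF n f + sumF n g.
Proof.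
  revert f g; induction n; simpl; intros f g; [ring|].
  rewrite (IHn (fun i => f (Fin.FS i)) (fun i => g (Fin.FS i))); ring.
Qed.

Lemma sumF_scal n c (f : Fin.t n -> R) : sumF n (fun i => c * f i) = c * sumF n f.
Proof.
  revert f; induction n; simpl; intros f; [ring|].
  rewrite (IHn (fun i => f (Fin.FS i))); ring.
Qed.

Lemma sumF_const n c : sumF n (fun _ => c) = INR n * c.
Proof.
  induction n; simpl sumF; [simpl; ring|]. rewrite IHn, S_INR; ring.
Qed.

Lemma sumF_zero n : sumF n (fun _ => 0) = 0.
Proof.
  rewrite sumF_const; ring.
Qed.

Lemma sumF_minus n (f g : Fin.t n -> R) : sumF n (fun i => f i - g i) = sumF n f - sumF n g.
Proof.
  revert f g; induction n; simpl; intros f g; [ring|].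
  rewrite (IHn (fun i => f (Fin.FS i)) (fun i => g (Fin.FS i))); ring.
Qed.

Lemma sumF_le n (f g : Fin.t n -> R) : (forall i, f i <= g i) -> sumF n f <= sumF n g.
Proof.
  revert f g; induction n; simpl; intros f g H; [lra|].
  pose proof (IHn (fun i => f (Fin.FS i)) (fun i => g (Fin.FS i)) (fun i => H _)).
  pose proof (H Fin.F1); lra.
Qed.

Lemma sumF_nonneg n (f : Fin.t n -> R) : (forall i, 0 <= f i) -> 0 <= sumF n f.
Proof.
  intros H. rewrite <- (sumF_zero n). apply sumF_le; auto.
Qed.

Lemma sumF_abs n (f : Fin.t n -> R) : Rabs (sumF n f) <= sumF n (fun i => Rabs (f i)).
Proof.
  revert f; induction n; simpl; intros f.
  - rewrite Rabs_R0; lra.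
  - eapply Rle_trans; [apply Rabs_triang|].
    pose proof (IHn (fun i => f (Fin.FS i))); lra.
Qed.

Lemma sumF_swap n l (F : Fin.t l -> Fin.t n -> R) :
  sumF n (fun j => sumF l (fun i => F i j)) = sumF l (fun i => sumF n (fun j => F i j)).
Proof.
  revert l F; induction n; intros l F; simpl.
  - rewrite sumF_zero. reflexivity.
  - rewrite (IHn l (fun i j => F i (Fin.FS j))). rewrite <- sumF_plus. reflexivity.
Qed.

Lemma sumF_ge_term n (f : Fin.t n -> R) i : (forall i, 0 <= f i) -> f i <= sumF n f.
Proof.
  induction i; intros H; simpl.
  - pose proof (sumF_nonneg n (fun i => f (Fin.FS i)) (fun i => H _)); lra.
  - pose proof (IHi (fun i => f (Fin.FS i)) (fun i => H _)). pose proof (H Fin.F1); lra.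
Qed.

Ltac vext := apply functional_extensionality; intro; unfold vsub, vadd, vscal; cbv beta; ring.

Lemma inner_comm n (x y : vec n) : inner x y = inner y x.
Proof.
  unfold inner; apply sumF_ext; intros; ring.
Qed.

Lemma inner_add_l n (x y z : vec n) : inner (vadd x y) z = inner x z + inner y z.
Proof.
  unfold inner, vadd. rewrite <- sumF_plus. apply sumF_ext; intros; ring.
Qed.

Lemma inner_sub_l n (x y z : vec n) : inner (vsub x y) z = inner x z - inner y z.
Proof.
  unfold inner, vsub. rewrite <- sumF_minus. apply sumF_ext; intros; ring.
Qed.

Lemma inner_scal_l n a (x z : vec n) : inner (vscal a x) z = a * inner x z.
Proof.
  unfold inner, vscal. rewrite <- sumF_scal. apply sumF_ext; intros; ring.
Qed.

Lemma inner_add_r n (x y z : vec n) : inner z (vadd x y) = inner z x + inner z y.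
Proof.
  rewrite !(inner_comm _ z). apply inner_add_l.
Qed.

Lemma inner_sub_r n (x y z : vec n) : inner z (vsub x y) = inner z x - inner z y.
Proof.
  rewrite !(inner_comm _ z). apply inner_sub_l.
Qed.

Lemma inner_scal_r n a (x z : vec n) : inner z (vscal a x) = a * inner z x.
Proof.
  rewrite !(inner_comm _ z). apply inner_scal_l.
Qed.

Lemma inner_zero_r n (v : vec n) : inner v (fun _ => 0) = 0.
Proof.
  unfold inner. transitivity (sumF n (fun _ => 0)). apply sumF_ext; intros; ring. apply sumF_zero.
Qed.

Lemma inner_zero_l n (v : vec n) : inner (fun _ => 0) v = 0.
Proof.
  rewrite inner_comm. apply inner_zero_r.
Qed.

Lemma inner_sub_sq n (a b : vec n) : inner (vsub a b) (vsub a b) = inner a a - 2 * inner a b + inner b b.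
Proof.
  rewrite inner_sub_l, !inner_sub_r, (inner_comm _ b a). ring.
Qed.

Lemma inner_self_nonneg n (x : vec n) : 0 <= inner x x.
Proof.
  unfold inner. apply sumF_nonneg. intros; nra.
Qed.

Lemma vnorm_nonneg n (x : vec n) : 0 <= vnorm x.
Proof.
  apply sqrt_pos.
Qed.

Lemma vnorm_sq n (x : vec n) : vnorm x * vnorm x = inner x x.
Proof.
  apply sqrt_sqrt, inner_self_nonneg.
Qed.

Lemma vnorm_eq_sqrt n (x : vec n) r : 0 <= r -> r * r = inner x x -> vnorm x = r.
Proof.
  intros H1 H2. unfold vnorm. rewrite <- H2. apply sqrt_square; auto.
Qed.

Lemma quadratic_nonneg_discriminant (a b c : R) : 0 <= a -> 0 <= c -> (forall t, 0 <= a - 2*t*b + t*t*c) -> b*b <= a*c.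
Proof.
  intros Ha Hc H.
  destruct (Req_dec c 0) as [E|E].
  - subst c. destruct (Req_dec b 0) as [Eb|Eb]; [subst; nra|].
    specialize (H ((a+1)/(2*b))). exfalso.
    assert (2 * ((a + 1) / (2 * b)) * b = a + 1) by (field; auto). nra.
  - specialize (H (b/c)).
    assert (2 * (b / c) * b = 2 * (b*b/c)) by (field; auto).
    assert (b / c * (b / c) * c = b*b/c) by (field; auto).
    assert (b*b/c <= a) by lra.
    assert (0 < c) by lra.
    apply (Rmult_le_compat_r c) in H2; [|lra].
    replace (b*b/c*c) with (b*b) in H2 by (field; auto). lra.
Qed.

Lemma cauchy_schwarz n (x y : vec n) : Rabs (inner x y) <= vnorm x * vnorm y.
Proof.
  assert (Hq : inner x y * inner x y <= inner x x * inner y y).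
  { apply quadratic_nonneg_discriminant; try apply inner_self_nonneg. intros t.
    pose proof (inner_self_nonneg n (vsub x (vscal t y))).
    rewrite inner_sub_l, !inner_sub_r, !inner_scal_l, !inner_scal_r in H.
    rewrite (inner_comm _ y x) in H. nra. }
  rewrite <- !vnorm_sq in Hq.
  pose proof (vnorm_nonneg n x); pose proof (vnorm_nonneg n y).
  assert (Rabs (inner x y) * Rabs (inner x y) = inner x y * inner x y) by (rewrite <- Rabs_mult; apply Rabs_right; nra).
  pose proof (Rabs_pos (inner x y)).
  set (P := vnorm x * vnorm y). assert (0 <= P) by (unfold P; nra).
  assert (P * P = vnorm x * vnorm x * (vnorm y * vnorm y)) by (unfold P; ring).
  destruct (Rle_dec (Rabs (inner x y)) P); auto. nra.
Qed.

Lemma inner_le_vnorm n (x y : vec n) : inner x y <= vnorm x * vnorm y.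
Proof.
  pose proof (cauchy_schwarz n x y). pose proof (Rle_abs (inner x y)). lra.
Qed.

Lemma vnorm_triangle n (x y : vec n) : vnorm (vadd x y) <= vnorm x + vnorm y.
Proof.
  pose proof (vnorm_nonneg n x); pose proof (vnorm_nonneg n y).
  pose proof (vnorm_nonneg n (vadd x y)).
  assert (vnorm (vadd x y) * vnorm (vadd x y) <= (vnorm x + vnorm y) * (vnorm x + vnorm y)).
  { rewrite vnorm_sq, inner_add_l, !inner_add_r.
    pose proof (inner_le_vnorm n x y). rewrite (inner_comm _ y x).
    pose proof (vnorm_sq n x); pose proof (vnorm_sq n y). nra. }
  nra.
Qed.

Lemma vnorm_scal n a (x : vec n) : vnorm (vscal a x) = Rabs a * vnorm x.
Proof.
  apply vnorm_eq_sqrt.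
  - pose proof (Rabs_pos a); pose proof (vnorm_nonneg n x); nra.
  - rewrite inner_scal_l, inner_scal_r, <- vnorm_sq.
    replace (Rabs a * vnorm x * (Rabs a * vnorm x)) with ((Rabs a * Rabs a) * (vnorm x * vnorm x)) by ring.
    rewrite <- Rabs_mult, Rabs_right by nra. ring.
Qed.

Lemma vnorm_sub_comm n (x y : vec n) : vnorm (vsub x y) = vnorm (vsub y x).
Proof.
  replace (vsub x y) with (vscal (-1) (vsub y x)) by vext.
  rewrite vnorm_scal. replace (Rabs (-1)) with 1 by (rewrite Rabs_left by lra; ring). ring.
Qed.

Lemma vnorm_sub_triangle n (x y z : vec n) : vnorm (vsub x z) <= vnorm (vsub x y) + vnorm (vsub y z).
Proof.
  replace (vsub x z) with (vadd (vsub x y) (vsub y z)) by vext. apply vnorm_triangle.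
Qed.

Lemma vnorm_le_sub n (a b : vec n) : vnorm a <= vnorm (vsub a b) + vnorm b.
Proof.
  replace a with (vadd (vsub a b) b) at 1 by vext. apply vnorm_triangle.
Qed.

Lemma vnorm_sub_shift n (a v d : vec n) :
  vnorm (vsub a v) <= vnorm (vsub v (vadd a (vscal 2 d))) + 2 * vnorm d.
Proof.
  replace (vsub a v) with (vadd (vscal (-1) (vsub v (vadd a (vscal 2 d)))) (vscal (-2) d)) by vext.
  eapply Rle_trans; [apply vnorm_triangle|]. rewrite !vnorm_scal.
  replace (Rabs (-1)) with 1 by (rewrite Rabs_left by lra; ring).
  replace (Rabs (-2)) with 2 by (rewrite Rabs_left by lra; ring). lra.
Qed.

Lemma vnorm_coord n (x : vec n) i : Rabs (x i) <= vnorm x.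
Proof.
  rewrite <- sqrt_Rsqr_abs. apply sqrt_le_1_alt. unfold Rsqr.
  apply (sumF_ge_term n (fun i => x i * x i)). intros; nra.
Qed.

Definition vcons {n} (a : R) (b : vec n) : vec (S n) := fun i => Fin.caseS' i (fun _ => R) a b.

Definition vtail {n} (x : vec (S n)) : vec n := fun i => x (Fin.FS i).

Lemma vnorm_le_head_tail n (x : vec (S n)) : vnorm x <= Rabs (x Fin.F1) + vnorm (vtail x).
Proof.
  unfold vnorm, inner, vtail. simpl.
    set (T := sumF n (fun i => x (Fin.FS i) * x (Fin.FS i))) in *.
    assert (0 <= T) by (apply sumF_nonneg; intros; nra).
    pose proof (sqrt_pos T). pose proof (Rabs_pos (x Fin.F1)).
    rewrite <- (sqrt_square (Rabs (x Fin.F1) + sqrt T)) by lra.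
    apply sqrt_le_1_alt.
    assert (Rabs (x Fin.F1) * Rabs (x Fin.F1) = x Fin.F1 * x Fin.F1) by (rewrite <- Rabs_mult; apply Rabs_right; nra).
    pose proof (sqrt_sqrt T H). nra.
Qed.

Lemma vnorm_tail_le n (x : vec (S n)) : vnorm (vtail x) <= vnorm x.
Proof.
  unfold vnorm, inner, vtail. simpl. apply sqrt_le_1_alt. nra.
Qed.

Lemma vnorm_vec0 (x : vec 0) : vnorm x = 0.
Proof.
  unfold vnorm, inner; simpl. apply sqrt_0.
Qed.

Lemma vnorm_le_sumabs n (x : vec n) : vnorm x <= sumF n (fun i => Rabs (x i)).
Proof.
  revert x; induction n as [|n IHn]; intros x.
  - rewrite vnorm_vec0. simpl. lra.
  - eapply Rle_trans; [apply vnorm_le_head_tail|]. simpl. pose proof (IHn (vtail x)). unfold vtail in *. lra.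
Qed.

Lemma vnorm_zero n : vnorm (fun _ : Fin.t n => 0) = 0.
Proof.
  apply vnorm_eq_sqrt; [lra|]. unfold inner.
  transitivity (sumF n (fun _ => 0)). rewrite sumF_zero; ring. apply sumF_ext; intros; ring.
Qed.

Lemma vnorm_sub_self n (x : vec n) : vnorm (vsub x x) = 0.
Proof.
  replace (vsub x x) with (fun _ : Fin.t n => 0) by vext. apply vnorm_zero.
Qed.

Lemma vnorm_eq0 n (x : vec n) : vnorm x = 0 -> x = (fun _ => 0).
Proof.
  intros H. apply functional_extensionality; intro i.
  pose proof (vnorm_coord n x i). rewrite H in H0. pose proof (Rabs_pos (x i)).
  destruct (Req_dec (x i) 0); auto. pose proof (Rabs_pos_lt _ H2). lra.
Qed.

Lemma vnorm_sub_le_of_inner_le n (v G : vec n) e : 0 <= e ->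
  (forall h, inner v h - e * vnorm h <= inner G h) -> vnorm (vsub v G) <= e.
Proof.
  intros He H. specialize (H (vsub v G)).
  assert (inner v (vsub v G) - inner G (vsub v G) = vnorm (vsub v G) * vnorm (vsub v G))
    by (rewrite vnorm_sq, inner_sub_l; ring).
  pose proof (vnorm_nonneg n (vsub v G)). nra.
Qed.

Lemma nearest_point_inner_le n (u z c : vec n) : vnorm (vsub u z) <= vnorm (vsub u c) ->
  inner (vsub u z) (vsub c z) <= / 2 * (vnorm (vsub c z) * vnorm (vsub c z)).
Proof.
  intros H. pose proof (vnorm_nonneg n (vsub u z)).
  assert (vnorm (vsub u z) * vnorm (vsub u z) <= vnorm (vsub u c) * vnorm (vsub u c)) by nra.
  rewrite !vnorm_sq in *. replace (vsub u c) with (vsub (vsub u z) (vsub c z)) in H1 by vext.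
  rewrite (inner_sub_sq n (vsub u z) (vsub c z)) in H1. lra.
Qed.

Definition mnorm {l n} (A : mat l n) : R := sumF l (fun i => sumF n (fun j => Rabs (A i j))).

Lemma mnorm_nonneg l n (A : mat l n) : 0 <= mnorm A.
Proof.
  apply sumF_nonneg; intros; apply sumF_nonneg; intros; apply Rabs_pos.
Qed.

Lemma mapply_bound l n (A : mat l n) h : vnorm (mapply A h) <= mnorm A * vnorm h.
Proof.
  eapply Rle_trans; [apply vnorm_le_sumabs|]. unfold mnorm. rewrite Rmult_comm, <- sumF_scal.
  apply sumF_le; intros i. unfold mapply. eapply Rle_trans; [apply sumF_abs|].
  rewrite <- sumF_scal. apply sumF_le; intros j. rewrite Rabs_mult.
  pose proof (vnorm_coord n h j). pose proof (Rabs_pos (A i j)). nra.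
Qed.

Lemma mtapply_bound l n (A : mat l n) lam : vnorm (mtapply A lam) <= mnorm A * vnorm lam.
Proof.
  eapply Rle_trans; [apply vnorm_le_sumabs|]. unfold mnorm. 
  rewrite <- (sumF_swap n l (fun i j => Rabs (A i j))).
  rewrite Rmult_comm, <- sumF_scal.
  apply sumF_le; intros j. unfold mtapply. eapply Rle_trans; [apply sumF_abs|].
  rewrite <- sumF_scal. apply sumF_le; intros i. rewrite Rabs_mult.
  pose proof (vnorm_coord l lam i). pose proof (Rabs_pos (A i j)). nra.
Qed.

Lemma inner_mtapply l n (A : mat l n) lam h : inner (mtapply A lam) h = inner lam (mapply A h).
Proof.
  unfold inner, mtapply, mapply.
  transitivity (sumF n (fun j => sumF l (fun i => A i j * lam i * h j))).
  { apply sumF_ext; intro j. rewrite Rmult_comm, <- sumF_scal. apply sumF_ext; intros; ring. }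
  rewrite (sumF_swap n l (fun i j => A i j * lam i * h j)).
  apply sumF_ext; intro i. rewrite <- sumF_scal. apply sumF_ext; intros; ring.
Qed.

Lemma mapply_scal l n (A : mat l n) t h : mapply A (vscal t h) = vscal t (mapply A h).
Proof.
  apply functional_extensionality; intro i. unfold mapply, vscal. rewrite <- sumF_scal.
  apply sumF_ext; intros; ring.
Qed.

Lemma mtapply_scal l n (A : mat l n) t h : mtapply A (vscal t h) = vscal t (mtapply A h).
Proof.
  apply functional_extensionality; intro i. unfold mtapply, vscal. rewrite <- sumF_scal.
  apply sumF_ext; intros; ring.
Qed.

Lemma mtapply_sub l n (A : mat l n) x y : mtapply A (vsub x y) = vsub (mtapply A x) (mtapply A y).
Proof.
  apply functional_extensionality; intro i. unfold mtapply, vsub. rewrite <- sumF_minus.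
  apply sumF_ext; intros; ring.
Qed.

Definition msub {l n} (A B : mat l n) : mat l n := fun i j => A i j - B i j.

Lemma mtapply_msub l n (A B : mat l n) x : mtapply (msub A B) x = vsub (mtapply A x) (mtapply B x).
Proof.
  apply functional_extensionality; intro i. unfold mtapply, vsub, msub. rewrite <- sumF_minus.
  apply sumF_ext; intros; ring.
Qed.

Lemma mnorm_small l n (A : mat l n) e : (forall i j, Rabs (A i j) <= e) -> mnorm A <= INR l * INR n * e.
Proof.
  intros H. unfold mnorm. rewrite Rmult_assoc, <- sumF_const. apply sumF_le; intros i.
  rewrite <- sumF_const. apply sumF_le; auto.
Qed.

Lemma mnorm_close l n (A B : mat l n) e : (forall i j, Rabs (A i j - B i j) <= e) -> mnorm A <= mnorm B + INR l * INR n * e.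
Proof.
  intros H. unfold mnorm. rewrite Rmult_assoc, <- sumF_const, <- sumF_plus. apply sumF_le; intros i.
  rewrite <- sumF_const, <- sumF_plus. apply sumF_le; intros j. specialize (H i j).
  pose proof (Rabs_triang (A i j - B i j) (B i j)). replace (A i j - B i j + B i j) with (A i j) in H0 by ring. lra.
Qed.

Lemma le_of_le_plus_lin a b c T : 0 < T -> 0 <= c -> (forall tau, 0 < tau < T -> a <= b + c * tau) -> a <= b.
Proof.
  intros HT Hc H. apply Rnot_lt_le; intros Hl.
  set (tau := Rmin (T/2) ((a-b)/(2*(c+1)))).
  assert (0 < tau) by (apply Rmin_glb_lt; [lra|apply Rdiv_lt_0_compat; lra]).
  assert (tau <= T/2) by apply Rmin_l. assert (tau <= (a-b)/(2*(c+1))) by apply Rmin_r.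
  specialize (H tau ltac:(lra)).
  assert (c * tau <= (a-b)/2).
  { apply Rle_trans with ((c+1) * ((a-b)/(2*(c+1)))); [nra|]. right; field; lra. }
  lra.
Qed.

Lemma le_of_le_plus_eps a b : (forall e, 0 < e -> a <= b + e) -> a <= b.
Proof.
  intros H. apply (le_of_le_plus_lin a b 1 1); try lra. intros tau Ht. specialize (H tau ltac:(lra)). lra.
Qed.

Lemma exists_pos_le a b : 0 < a -> 0 < b -> exists d, 0 < d /\ d <= a /\ d <= b.
Proof.
  intros Ha Hb. exists (Rmin a b). split; [apply Rmin_glb_lt; auto|split; [apply Rmin_l|apply Rmin_r]].
Qed.

Lemma exists_pos_mul_le c a : 0 <= c -> 0 < a -> exists eta, 0 < eta /\ c * eta <= a.
Proof.
  intros Hc Ha. exists (a / (c + 1)). split; [apply Rdiv_lt_0_compat; lra|].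
  apply Rle_trans with ((c + 1) * (a / (c + 1))); [|right; field; lra].
  apply Rmult_le_compat_r; [left; apply Rdiv_lt_0_compat|]; lra.
Qed.

Lemma le_of_mul_coeff_le t d k1 k2 c : 0 < k1 < k2 -> 0 <= t -> k1 / k2 <= c -> t * c <= k1 * d -> t <= k2 * d.
Proof.
  intros Hk Ht Hc Htc.
  assert (Hq : 0 < k1 / k2) by (apply Rdiv_lt_0_compat; lra).
  apply (Rmult_le_reg_l (k1 / k2)); [auto|].
  replace (k1 / k2 * (k2 * d)) with (k1 * d) by (field; lra).
  apply Rle_trans with (t * c); [|auto]. rewrite Rmult_comm. apply Rmult_le_compat_l; auto.
Qed.

Lemma sqrt_plus_sq_ge a e : 0 <= a -> a <= sqrt (a*a + e*e).
Proof.
  intros Ha. rewrite <- (sqrt_square a) at 1 by auto. apply sqrt_le_1_alt. nra.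
Qed.

Lemma sqrt_plus_sq_lip a b e : 0 <= a -> 0 <= b -> Rabs (sqrt (a*a + e*e) - sqrt (b*b + e*e)) <= Rabs (a - b).
Proof.
  intros Ha Hb.
  assert (H : forall a b, 0 <= a -> 0 <= b -> sqrt (a*a + e*e) - sqrt (b*b + e*e) <= Rabs (a - b)).
  { clear a b Ha Hb. intros a b Ha Hb.
    set (sa := sqrt (a*a+e*e)). set (sb := sqrt (b*b+e*e)).
    pose proof (sqrt_plus_sq_ge a e Ha). pose proof (sqrt_plus_sq_ge b e Hb). fold sa sb in H, H0.
    assert (sa*sa = a*a+e*e) by (apply sqrt_sqrt; nra). assert (sb*sb = b*b+e*e) by (apply sqrt_sqrt; nra).
    destruct (Rle_dec sa sb); [pose proof (Rabs_pos (a-b)); lra|].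
    assert (Hs : 0 < sa + sb) by (pose proof (sqrt_pos (b*b+e*e)); fold sb in H3; lra).
    assert ((sa - sb) * (sa + sb) <= Rabs (a-b) * (sa + sb)).
    { replace ((sa - sb) * (sa + sb)) with ((a - b) * (a + b)) by nra.
      pose proof (Rle_abs (a-b)). pose proof (Rle_abs (-(a-b))). rewrite Rabs_Ropp in H4.
      destruct (Rle_dec 0 (a-b)); nra. }
    apply (Rmult_le_reg_r (sa+sb)); auto. }
  apply Rabs_le. split; [|apply H; auto].
  pose proof (H b a Hb Ha). rewrite Rabs_minus_sym in H0. lra.
Qed.

Lemma sqrt_0_plus_sq e : 0 <= e -> sqrt (0*0 + e*e) = e.
Proof.
  intros. replace (0*0+e*e) with (e*e) by ring. apply sqrt_square; auto.
Qed.

(** * Extended reals and distance functions *)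

Lemma Rbar_le_trans a b c : Rbar_le a b -> Rbar_le b c -> Rbar_le a c.
Proof.
  destruct a, b, c; simpl; auto; try lra; tauto.
Qed.

Lemma Rbar_le_antisym a b : Rbar_le a b -> Rbar_le b a -> a = b.
Proof.
  destruct a, b; simpl; try tauto. intros; f_equal; lra.
Qed.

Lemma Rbar_le_of_le_plus_eps x a : (forall e, 0 < e -> Rbar_le x (Finite (a + e))) -> Rbar_le x (Finite a).
Proof.
  intros H. destruct x as [r| |]; simpl; auto.
  - apply le_of_le_plus_eps. intros e He. specialize (H e He). simpl in H. auto.
  - specialize (H 1 ltac:(lra)). simpl in H. auto.
Qed.

Lemma Rbar_glb_exists (E : Rbar -> Prop) : exists s, is_glb_Rbar E s.
Proof.
  destruct (classic (E m_infty)) as [Hm|Hm].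
  { exists m_infty. split; [intros; simpl; auto|]. intros u Hu. apply Hu; auto. }
  destruct (classic (exists r, E (Finite r))) as [[r0 Hr0]|Hno].
  2:{ exists p_infty. split.
      - intros x Hx. destruct x; simpl; auto. exfalso; apply Hno; eauto.
      - intros u _. destruct u; simpl; auto. }
  destruct (classic (exists b, forall r, E (Finite r) -> b <= r)) as [[b Hb]|Hnb].
  - set (G := fun y => E (Finite (- y))).
    assert (HG : bound G). { exists (-b). intros y Hy. apply Hb in Hy. lra. }
    assert (HG2 : exists y, G y). { exists (-r0). unfold G. rewrite Ropp_involutive; auto. }
    destruct (completeness G HG HG2) as [m [Hm1 Hm2]].
    exists (Finite (-m)). split.
    + intros x Hx. destruct x as [r| |]; simpl; auto; try tauto.
      assert (G (-r)) by (unfold G; rewrite Ropp_involutive; auto).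
        apply Hm1 in H. lra.
    + intros u Hu. destruct u as [a| |]; simpl; auto.
      * assert (m <= -a). { apply Hm2. intros y Hy. specialize (Hu _ Hy). simpl in Hu. lra. }
        lra.
      * specialize (Hu _ Hr0). simpl in Hu. auto.
  - exists m_infty. split; [intros; simpl; auto|].
    intros u Hu. destruct u as [a| |]; simpl; auto.
    + apply Hnb. exists a. intros r Hr. specialize (Hu _ Hr); simpl in Hu; auto.
    + specialize (Hu _ Hr0); simpl in Hu; auto.
Qed.

Lemma Rbar_lub_exists (E : Rbar -> Prop) : exists s, is_lub_Rbar E s.
Proof.
  destruct (classic (E p_infty)) as [Hm|Hm].
  { exists p_infty. split; [intros x _; destruct x; simpl; auto|]. intros u Hu. apply Hu; auto. }
  destruct (classic (exists r, E (Finite r))) as [[r0 Hr0]|Hno].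
  2:{ exists m_infty. split.
      - intros x Hx. destruct x; simpl; auto. exfalso; apply Hno; eauto.
      - intros u _. destruct u; simpl; auto. }
  destruct (classic (exists b, forall r, E (Finite r) -> r <= b)) as [[b Hb]|Hnb].
  - set (G := fun y => E (Finite y)).
    assert (HG : bound G). { exists b. intros y Hy. apply Hb in Hy. lra. }
    assert (HG2 : exists y, G y). { exists r0. auto. }
    destruct (completeness G HG HG2) as [m [Hm1 Hm2]].
    exists (Finite m). split.
    + intros x Hx. destruct x as [r| |]; simpl; auto; try tauto.
      all: apply Hm1 in Hx; lra.
    + intros u Hu. destruct u as [a| |]; simpl; auto.
      * apply Hm2. intros y Hy. specialize (Hu _ Hy). simpl in Hu. lra.
      * specialize (Hu _ Hr0). simpl in Hu. auto.
  - exists p_infty. split; [intros x _; destruct x; simpl; auto|].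
    intros u Hu. destruct u as [a| |]; simpl; auto.
    + apply Hnb. exists a. intros r Hr. specialize (Hu _ Hr); simpl in Hu; auto.
    + specialize (Hu _ Hr0); simpl in Hu; auto.
Qed.

Lemma Rbar_inf_glb E : is_glb_Rbar E (Rbar_inf E).
Proof.
  unfold Rbar_inf. apply epsilon_spec. apply Rbar_glb_exists.
Qed.

Lemma Rbar_sup_lub E : is_lub_Rbar E (Rbar_sup E).
Proof.
  unfold Rbar_sup. apply epsilon_spec. apply Rbar_lub_exists.
Qed.

Lemma Rbar_inf_le (E : Rbar -> Prop) x : E x -> Rbar_le (Rbar_inf E) x.
Proof.
  intros. apply (proj1 (Rbar_inf_glb E)); auto.
Qed.

Lemma Rbar_inf_ge (E : Rbar -> Prop) u : (forall x, E x -> Rbar_le u x) -> Rbar_le u (Rbar_inf E).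
Proof.
  intros. apply (proj2 (Rbar_inf_glb E)); auto.
Qed.

Lemma Rbar_sup_ge (E : Rbar -> Prop) x : E x -> Rbar_le x (Rbar_sup E).
Proof.
  intros. apply (proj1 (Rbar_sup_lub E)); auto.
Qed.

Lemma Rbar_sup_le (E : Rbar -> Prop) u : (forall x, E x -> Rbar_le x u) -> Rbar_le (Rbar_sup E) u.
Proof.
  intros. apply (proj2 (Rbar_sup_lub E)); auto.
Qed.

Lemma Rbar_inf_lt (E : Rbar -> Prop) a : ~ Rbar_le (Finite a) (Rbar_inf E) ->
  exists x, E x /\ ~ Rbar_le (Finite a) x.
Proof.
  intros H. apply NNPP; intros H2. apply H, Rbar_inf_ge. intros x Hx.
  apply NNPP; intros H3; apply H2; eauto.
Qed.

Lemma dist_nonempty n (x : vec n) (S : vec n -> Prop) y0 : S y0 ->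
  exists d, dist x S = Finite d /\ 0 <= d /\ (forall y, S y -> d <= vnorm (vsub x y)) /\
    (forall eps, 0 < eps -> exists y, S y /\ vnorm (vsub x y) < d + eps).
Proof.
  intros Hy0. unfold dist.
  set (E := fun t => exists y, S y /\ t = Finite (vnorm (vsub x y))).
  assert (H1 : Rbar_le (Finite 0) (Rbar_inf E)).
  { apply Rbar_inf_ge. intros t [y [_ ->]]. simpl. apply vnorm_nonneg. }
  assert (H2 : Rbar_le (Rbar_inf E) (Finite (vnorm (vsub x y0)))).
  { apply Rbar_inf_le. exists y0; auto. }
  destruct (Rbar_inf E) as [d| |] eqn:Hd; simpl in H1, H2; try tauto.
  exists d. split; [auto|]. split; [auto|]. split.
  - intros y Hy. assert (Rbar_le (Rbar_inf E) (Finite (vnorm (vsub x y)))) by (apply Rbar_inf_le; exists y; auto).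
    rewrite Hd in H; simpl in H; auto.
  - intros eps Heps. apply NNPP; intros Hn.
    assert (Rbar_le (Finite (d + eps)) (Rbar_inf E)).
    { apply Rbar_inf_ge. intros t [y [Hy ->]]. simpl. apply Rnot_lt_le. intros Hl; apply Hn; eauto. }
    rewrite Hd in H; simpl in H. lra.
Qed.

(* The real distance; it is junk ([0]) when [S] is empty, so lemmas about it assume a point of [S]. *)
Definition rdist {n} (x : vec n) (S : vec n -> Prop) : R :=
  match dist x S with Finite r => r | _ => 0 end.

Lemma rdist_spec n (x : vec n) (S : vec n -> Prop) y0 : S y0 ->
  dist x S = Finite (rdist x S) /\ 0 <= rdist x S /\ (forall y, S y -> rdist x S <= vnorm (vsub x y)) /\
    (forall eps, 0 < eps -> exists y, S y /\ vnorm (vsub x y) < rdist x S + eps).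
Proof.
  intros Hy0. destruct (dist_nonempty n x S y0 Hy0) as [d [Hd H]].
  unfold rdist. rewrite Hd. auto.
Qed.

Lemma rdist_le n (x : vec n) (S : vec n -> Prop) y : S y -> rdist x S <= vnorm (vsub x y).
Proof.
  intros Hy. apply (rdist_spec n x S y Hy); auto.
Qed.

Lemma rdist_nonneg n (x : vec n) (S : vec n -> Prop) y : S y -> 0 <= rdist x S.
Proof.
  intros Hy. apply (rdist_spec n x S y Hy).
Qed.

Lemma rdist_lip n (a b : vec n) (S : vec n -> Prop) y0 : S y0 ->
  rdist a S <= vnorm (vsub a b) + rdist b S.
Proof.
  intros Hy0. apply Rnot_lt_le; intros Hlt.
  destruct (rdist_spec n b S y0 Hy0) as [_ [_ [_ Happ]]].
  destruct (Happ (rdist a S - vnorm (vsub a b) - rdist b S)) as [y [Hy Hb]]; [lra|].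
  pose proof (rdist_le n a S y Hy). pose proof (vnorm_sub_triangle n a b y). lra.
Qed.

Lemma rdist_lip_abs n (a b : vec n) (S : vec n -> Prop) y0 : S y0 ->
  Rabs (rdist a S - rdist b S) <= vnorm (vsub a b).
Proof.
  intros Hy0. pose proof (rdist_lip n a b S y0 Hy0). pose proof (rdist_lip n b a S y0 Hy0).
  rewrite vnorm_sub_comm in H0. apply Rabs_le; lra.
Qed.

Lemma rdist_self n (x : vec n) (S : vec n -> Prop) : S x -> rdist x S = 0.
Proof.
  intros Hx. pose proof (rdist_le n x S x Hx). rewrite vnorm_sub_self in H.
  pose proof (rdist_nonneg n x S x Hx). lra.
Qed.

Lemma Rbar_le_dist_rdist n m (S : vec n -> Prop) (K : vec m -> Prop) (y : vec n) (z : vec m) kappa s0 k0 : S s0 -> K k0 ->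
  Rbar_le (dist y S) (Rbar_scal kappa (dist z K)) <-> rdist y S <= kappa * rdist z K.
Proof.
  intros Ss0 Kk0.
  destruct (rdist_spec n y S s0 Ss0) as [HdS _]. destruct (rdist_spec m z K k0 Kk0) as [HdK _].
  rewrite HdS, HdK. simpl. tauto.
Qed.

(** * Sequences and compactness *)

Definition incr (phi : nat -> nat) := forall k, (phi k < phi (S k))%nat.

Lemma incr_ge phi : incr phi -> forall k, (k <= phi k)%nat.
Proof.
  intros H k; induction k; [lia|]. specialize (H k); lia.
Qed.

Lemma incr_mono phi : incr phi -> forall a b, (a <= b)%nat -> (phi a <= phi b)%nat.
Proof.
  intros H a b Hab. induction Hab; [lia|]. specialize (H m); lia.
Qed.

Lemma incr_comp phi psi : incr phi -> incr psi -> incr (fun k => phi (psi k)).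
Proof.
  intros H1 H2 k. unfold incr in *. pose proof (incr_mono phi H1 (S (psi k)) (psi (S k)) (H2 k)).
  specialize (H1 (psi k)). lia.
Qed.

Lemma extract_subsequence (P : nat -> nat -> Prop) : (forall k N, exists p, (N <= p)%nat /\ P k p) ->
  exists phi, incr phi /\ forall k, P k (phi k).
Proof.
  intros H.
  set (c := fun k N => proj1_sig (constructive_indefinite_description _ (H k N))).
  assert (Hc : forall k N, (N <= c k N)%nat /\ P k (c k N)).
  { intros k N. unfold c. destruct (constructive_indefinite_description _ (H k N)); simpl; auto. }
  set (phi := fix f k := match k with 0%nat => c 0%nat 0%nat | S k' => c k (S (f k')) end).
  exists phi. split.
  - intros k. simpl. destruct (Hc (S k) (S (phi k))). lia.
  - intros k. destruct k; simpl; apply Hc.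
Qed.

Lemma inv_succ_lt eps : 0 < eps -> exists N, forall k, (N <= k)%nat -> 1 / (INR k + 1) < eps.
Proof.
  intros He. destruct (INR_unbounded (1/eps)) as [N HN]. exists N. intros k Hk.
  apply le_INR in Hk. pose proof (pos_INR N).
  assert (H1 : 1/eps < INR k + 1) by lra.
  apply (Rmult_lt_compat_l eps) in H1; auto.
  assert (eps * (1/eps) = 1) by (field; lra).
  apply (Rmult_lt_reg_r (INR k + 1)); [lra|]. unfold Rdiv. rewrite Rmult_assoc, Rinv_l by lra. lra.
Qed.

Lemma inv_succ_pos k : 0 < 1 / (INR k + 1).
Proof.
  pose proof (pos_INR k). apply Rdiv_lt_0_compat; lra.
Qed.

Lemma inv_succ_le1 k : 1 / (INR k + 1) <= 1.
Proof.
  pose proof (pos_INR k). apply (Rmult_le_reg_r (INR k + 1)); [lra|].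
  unfold Rdiv. rewrite Rmult_assoc, Rinv_l by lra. lra.
Qed.

Lemma bolzano_weierstrass_R (u : nat -> R) M : (forall k, Rabs (u k) <= M) ->
  exists phi a, incr phi /\ forall eps, 0 < eps -> exists N, forall k, (N <= k)%nat -> Rabs (u (phi k) - a) < eps.
Proof.
  intros HM.
  destruct (Bolzano_Weierstrass u (fun c => -M <= c <= M) (compact_P3 (-M) M)) as [a Ha].
  { intros k. specialize (HM k). pose proof (Rle_abs (u k)). pose proof (Rle_abs (- u k)). rewrite Rabs_Ropp in H0. lra. }
  destruct (extract_subsequence (fun k p => Rabs (u p - a) < 1 / (INR k + 1))) as [phi [Hphi Hp]].
  { intros k N. destruct (Ha (fun y => Rabs (y - a) < 1 / (INR k + 1)) N) as [p [Hp1 Hp2]].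
    - exists (mkposreal _ (inv_succ_pos k)). intros y Hy. unfold disc in Hy. simpl in Hy. auto.
    - exists p; auto. }
  exists phi, a. split; auto. intros eps He. destruct (inv_succ_lt eps He) as [N HN].
  exists N. intros k Hk. specialize (Hp k). specialize (HN k Hk). lra.
Qed.

Lemma seq_conv_sub n (u : nat -> vec n) x phi : incr phi -> seq_conv u x -> seq_conv (fun k => u (phi k)) x.
Proof.
  intros Hp Hu eps He. destruct (Hu eps He) as [N HN]. exists N. intros k Hk.
  apply HN. pose proof (incr_ge phi Hp k). lia.
Qed.

Lemma seq_conv_unique n (u : nat -> vec n) x y : seq_conv u x -> seq_conv u y -> x = y.
Proof.
  intros Hx Hy. apply NNPP; intros Hne.
  assert (Hpos : 0 < vnorm (vsub x y)).
  { pose proof (vnorm_nonneg n (vsub x y)). destruct (Req_dec (vnorm (vsub x y)) 0) as [E|E]; [|lra].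
    exfalso; apply Hne. apply vnorm_eq0 in E. apply functional_extensionality; intro i.
    apply (f_equal (fun f => f i)) in E. unfold vsub in E. cbv beta in E. lra. }
  assert (Hp2 : 0 < vnorm (vsub x y) / 2) by lra.
  destruct (Hx _ Hp2) as [N1 H1]. destruct (Hy _ Hp2) as [N2 H2].
  specialize (H1 (N1 + N2)%nat ltac:(lia)). specialize (H2 (N1 + N2)%nat ltac:(lia)).
  pose proof (vnorm_sub_triangle n x (u (N1+N2)%nat) y). rewrite (vnorm_sub_comm n x (u (N1+N2)%nat)) in H. lra.
Qed.

Definition eventually (P : nat -> Prop) := exists N, forall k, (N <= k)%nat -> P k.

Lemma eventually_and P Q : eventually P -> eventually Q -> eventually (fun k => P k /\ Q k).
Proof.
  intros [N1 H1] [N2 H2]. exists (N1 + N2)%nat. intros k Hk. split; [apply H1|apply H2]; lia.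
Qed.

Lemma eventually_sub P phi : incr phi -> eventually P -> eventually (fun k => P (phi k)).
Proof.
  intros Hp [N H]. exists N. intros k Hk. apply H. pose proof (incr_ge phi Hp k). lia.
Qed.

Lemma eventually_inv_succ_lt e : 0 < e -> eventually (fun k => 1 / (INR k + 1) < e).
Proof.
  intros He. destruct (inv_succ_lt e He) as [N H]. exists N; auto.
Qed.

Lemma eventually_conv n (u : nat -> vec n) x e : seq_conv u x -> 0 < e ->
  eventually (fun k => vnorm (vsub (u k) x) < e).
Proof.
  intros H He. apply H; auto.
Qed.

Lemma eventually_witness P : eventually P -> exists k, P k.
Proof.
  intros [N H]. exists N; auto.
Qed.

Lemma eventually_impl (P Q : nat -> Prop) : (forall k, P k -> Q k) -> eventually P -> eventually Q.
Proof.
  intros H [N HN]. exists N; auto.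
Qed.

Lemma seq_choice {A : Type} (P : nat -> A -> Prop) :
  (forall k, exists a, P k a) -> exists u : nat -> A, forall k, P k (u k).
Proof.
  intros H. exists (fun k => proj1_sig (constructive_indefinite_description _ (H k))).
  intros k. exact (proj2_sig (constructive_indefinite_description _ (H k))).
Qed.

Lemma seq_choice3 {A B C : Type} (P : nat -> A -> B -> C -> Prop) :
  (forall k, exists a b c, P k a b c) ->
  exists (u : nat -> A) (w : nat -> B) (z : nat -> C), forall k, P k (u k) (w k) (z k).
Proof.
  intros H.
  destruct (seq_choice (fun k (p : A * B * C) => P k (fst (fst p)) (snd (fst p)) (snd p))) as [u Hu].
  - intros k. destruct (H k) as [a [b [c Habc]]]. exists (a, b, c). exact Habc.
  - exists (fun k => fst (fst (u k))), (fun k => snd (fst (u k))), (fun k => snd (u k)). exact Hu.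
Qed.

Lemma seq_conv_of_close n (u w : nat -> vec n) x : seq_conv u x ->
  (forall e, 0 < e -> eventually (fun k => vnorm (vsub (w k) (u k)) < e)) -> seq_conv w x.
Proof.
  intros Hu Hw e He.
  destruct (eventually_and _ _ (eventually_conv n u x (e / 2) Hu ltac:(lra)) (Hw (e / 2) ltac:(lra)))
    as [N HN].
  exists N. intros k Hk. destruct (HN k Hk).
  pose proof (vnorm_sub_triangle n (w k) (u k) x). lra.
Qed.

Lemma seq_conv_vnorm_le n (u : nat -> vec n) x b : seq_conv u x ->
  (forall e, 0 < e -> eventually (fun k => vnorm (u k) <= b + e)) -> vnorm x <= b.
Proof.
  intros Hu Hb. apply le_of_le_plus_eps. intros e He.
  destruct (eventually_witness _ (eventually_and _ _ (eventually_conv n u x (e / 2) Hu ltac:(lra))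
                                                     (Hb (e / 2) ltac:(lra)))) as [k [H1 H2]].
  pose proof (vnorm_le_sub n x (u k)). rewrite vnorm_sub_comm in H. lra.
Qed.

Lemma seq_conv_vnorm_le_scal n m (mu : nat -> vec m) lam (w : nat -> vec n) v (eps : nat -> R) kappa :
  0 <= kappa -> seq_conv mu lam -> seq_conv w v -> (forall e, 0 < e -> eventually (fun k => eps k < e)) ->
  (forall k, vnorm (mu k) <= (vnorm (w k) + eps k) * kappa) -> vnorm lam <= kappa * vnorm v.
Proof.
  intros Hk Hmu Hw Heps Hb. apply (seq_conv_vnorm_le m _ _ _ Hmu). intros e He.
  set (e' := e / (2 * (kappa + 1))). assert (He' : 0 < e') by (unfold e'; apply Rdiv_lt_0_compat; lra).
  refine (eventually_impl _ _ _ (eventually_and _ _ (eventually_conv n _ v e' Hw He') (Heps e' He'))).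
  intros k [H1 H2]. pose proof (vnorm_le_sub n (w k) v).
  apply Rle_trans with ((vnorm v + 2 * e') * kappa); [eapply Rle_trans; [apply Hb|]; apply Rmult_le_compat_r; lra|].
  assert (kappa * (2 * e') <= e).
  { apply Rle_trans with ((kappa + 1) * (2 * e')); [apply Rmult_le_compat_r; lra|]. unfold e'. right; field; lra. }
  lra.
Qed.

Lemma seq_conv_scal n (u : nat -> vec n) x tau : 0 <= tau -> seq_conv u x ->
  seq_conv (fun k => vscal tau (u k)) (vscal tau x).
Proof.
  intros Ht Hu e He. destruct (Hu (e / (tau + 1)) ltac:(apply Rdiv_lt_0_compat; lra)) as [N HN].
  exists N. intros k Hk.
  replace (vsub (vscal tau (u k)) (vscal tau x)) with (vscal tau (vsub (u k) x)) by vext.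
  rewrite vnorm_scal, Rabs_right by lra. specialize (HN k Hk).
  apply Rle_lt_trans with ((tau + 1) * vnorm (vsub (u k) x)); [pose proof (vnorm_nonneg n (vsub (u k) x)); nra|].
  apply Rlt_le_trans with ((tau + 1) * (e / (tau + 1))); [apply Rmult_lt_compat_l; lra|right; field; lra].
Qed.

Lemma mtapply_seq_conv l n (A : nat -> mat l n) A0 (mu : nat -> vec l) lam :
  (forall e, 0 < e -> eventually (fun k => forall i j, Rabs (A k i j - A0 i j) <= e)) ->
  seq_conv mu lam -> seq_conv (fun k => mtapply (A k) (mu k)) (mtapply A0 lam).
Proof.
  intros HA Hmu e He.
  set (B := vnorm lam + 1). assert (HB : 0 < B) by (unfold B; pose proof (vnorm_nonneg l lam); lra).
  set (c := INR l * INR n + 1). assert (Hc : 0 < c) by (unfold c; pose proof (pos_INR l); pose proof (pos_INR n); nra).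
  pose proof (mnorm_nonneg _ _ A0) as HA0.
  set (e1 := Rmin 1 (e / (2 * (mnorm A0 + 1)))).
  assert (He1 : 0 < e1) by (apply Rmin_glb_lt; [lra|apply Rdiv_lt_0_compat; lra]).
  destruct (eventually_and _ _ (HA (e / (4 * c * B)) ltac:(apply Rdiv_lt_0_compat; nra))
                               (eventually_conv l mu lam e1 Hmu He1)) as [N HN].
  exists N. intros k Hk. destruct (HN k Hk) as [Hent Hclose].
  replace (vsub (mtapply (A k) (mu k)) (mtapply A0 lam))
    with (vadd (mtapply (msub (A k) A0) (mu k)) (mtapply A0 (vsub (mu k) lam)))
    by (rewrite mtapply_msub, mtapply_sub; vext).
  eapply Rle_lt_trans; [apply vnorm_triangle|].
  pose proof (mtapply_bound _ _ (msub (A k) A0) (mu k)) as H1.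
  pose proof (mtapply_bound _ _ A0 (vsub (mu k) lam)) as H2.
  assert (He1a : e1 <= 1) by apply Rmin_l. assert (He1b : e1 <= e / (2 * (mnorm A0 + 1))) by apply Rmin_r.
  assert (Hmk : vnorm (mu k) <= B) by (pose proof (vnorm_le_sub l (mu k) lam); unfold B; lra).
  assert (Hms : mnorm (msub (A k) A0) <= e / (4 * B)).
  { eapply Rle_trans; [apply mnorm_small; intros i j; apply Hent|].
    apply Rle_trans with (c * (e / (4 * c * B))).
    - apply Rmult_le_compat_r; [left; apply Rdiv_lt_0_compat; nra|unfold c; lra].
    - right; field; lra. }
  assert (Ht1 : mnorm (msub (A k) A0) * vnorm (mu k) <= e / 4).
  { apply Rle_trans with (e / (4 * B) * B); [|right; field; lra].
    apply Rmult_le_compat; auto; [apply mnorm_nonneg|apply vnorm_nonneg]. }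
  assert (Ht2 : mnorm A0 * vnorm (vsub (mu k) lam) <= e / 2).
  { apply Rle_trans with ((mnorm A0 + 1) * e1).
    - apply Rmult_le_compat; try lra; apply vnorm_nonneg.
    - apply Rle_trans with ((mnorm A0 + 1) * (e / (2 * (mnorm A0 + 1)))); [apply Rmult_le_compat_l; lra|].
      right; field; lra. }
  lra.
Qed.

Lemma bolzano_weierstrass_vec n (u : nat -> vec n) M : (forall k, vnorm (u k) <= M) ->
  exists phi x, incr phi /\ seq_conv (fun k => u (phi k)) x.
Proof.
  revert u M; induction n; intros u M HM.
  - exists (fun k => k), (fun _ => 0). split; [intro; lia|].
    intros eps He; exists 0%nat; intros. rewrite vnorm_vec0; lra.
  - destruct (bolzano_weierstrass_R (fun k => u k Fin.F1) M) as [phi1 [a [Hp1 Ha]]].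
    { intros k. eapply Rle_trans; [apply vnorm_coord|]. apply HM. }
    destruct (IHn (fun k => vtail (u (phi1 k))) M) as [phi2 [b [Hp2 Hb]]].
    { intros k. eapply Rle_trans; [apply vnorm_tail_le|]. apply HM. }
    exists (fun k => phi1 (phi2 k)), (vcons a b). split; [apply incr_comp; auto|].
    intros eps He.
    destruct (Ha (eps/2) ltac:(lra)) as [N1 HN1]. destruct (Hb (eps/2) ltac:(lra)) as [N2 HN2].
    exists (N1 + N2)%nat. intros k Hk.
    eapply Rle_lt_trans; [apply vnorm_le_head_tail|].
    assert (vtail (vsub (u (phi1 (phi2 k))) (vcons a b)) = vsub (vtail (u (phi1 (phi2 k)))) b) by reflexivity.
    rewrite H. specialize (HN2 k ltac:(lia)). simpl in HN2.
    pose proof (incr_ge phi2 Hp2 k). specialize (HN1 (phi2 k) ltac:(lia)).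
    unfold vsub at 1. simpl. lra.
Qed.

Lemma closed_inter_closed_ball n (T : vec n -> Prop) c r : is_closed T ->
  is_closed (fun y => T y /\ vnorm (vsub y c) <= r).
Proof.
  intros HT u x Hu Hc. split.
  - apply (HT u x); auto. intros k; apply Hu.
  - apply Rnot_lt_le; intros Hlt.
    destruct (Hc (vnorm (vsub x c) - r) ltac:(lra)) as [N HN].
    specialize (HN N (le_n N)). destruct (Hu N) as [_ H2].
    pose proof (vnorm_sub_triangle n x (u N) c). rewrite (vnorm_sub_comm n x (u N)) in H. lra.
Qed.

Lemma vnorm_le_center n (y c : vec n) R0 : vnorm (vsub y c) <= R0 -> vnorm y <= vnorm c + R0.
Proof.
  intros H. replace y with (vadd (vsub y c) c) by vext.
  pose proof (vnorm_triangle n (vsub y c) c). lra.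
Qed.

Lemma closed_bounded_min_exists n (T : vec n -> Prop) (F : vec n -> R) c R0 b y0 :
  is_closed T -> T y0 -> (forall y, T y -> vnorm (vsub y c) <= R0) -> (forall y, T y -> b <= F y) ->
  (forall y, T y -> forall eps, 0 < eps -> exists delta, 0 < delta /\
     forall y', T y' -> vnorm (vsub y' y) < delta -> F y <= F y' + eps) ->
  exists y, T y /\ forall y', T y' -> F y <= F y'.
Proof.
  intros HT Hy0 Hbd Hb Hlsc.
  set (G := fun r => exists y, T y /\ r = - F y).
  assert (HG : bound G). { exists (-b). intros r [y [Hy ->]]. specialize (Hb y Hy). lra. }
  assert (HG2 : exists r, G r) by (exists (- F y0); exists y0; auto).
  destruct (completeness G HG HG2) as [m [Hm1 Hm2]].
  assert (Hlow : forall y, T y -> -m <= F y).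
  { intros y Hy. assert (G (- F y)) by (exists y; auto). apply Hm1 in H. lra. }
  assert (Hk : forall k, exists y, T y /\ F y < -m + 1 / (INR k + 1)).
  { intros k. apply NNPP; intros Hn.
    assert (m <= m - 1/(INR k + 1)).
    { apply Hm2. intros r [y [Hy ->]]. apply Rnot_lt_le; intros Hl. apply Hn. exists y; split; auto; lra. }
    pose proof (inv_succ_pos k). lra. }
  set (ys := fun k => proj1_sig (constructive_indefinite_description _ (Hk k))).
  assert (Hys : forall k, T (ys k) /\ F (ys k) < -m + 1 / (INR k + 1)).
  { intros k. unfold ys. destruct (constructive_indefinite_description _ (Hk k)); simpl; auto. }
  destruct (bolzano_weierstrass_vec n ys (vnorm c + R0)) as [phi [y [Hphi Hconv]]].
  { intros k. apply vnorm_le_center, Hbd, Hys. }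
  assert (Ty : T y). { apply (HT (fun k => ys (phi k)) y); auto. intros k; apply Hys. }
  exists y. split; auto. intros y' Hy'.
  assert (F y <= -m).
  { apply Rnot_lt_le; intros Hl. set (eps := (F y + m)/3).
    destruct (Hlsc y Ty eps ltac:(unfold eps; lra)) as [delta [Hd Hdel]].
    destruct (Hconv delta Hd) as [N1 HN1]. destruct (inv_succ_lt eps ltac:(unfold eps; lra)) as [N2 HN2].
    specialize (HN1 (N1 + N2)%nat ltac:(lia)).
    pose proof (incr_ge phi Hphi (N1 + N2)%nat).
    specialize (HN2 (phi (N1 + N2)%nat) ltac:(lia)).
    specialize (Hdel _ (proj1 (Hys _)) HN1).
    pose proof (proj2 (Hys (phi (N1 + N2)%nat))). unfold eps in *. lra. }
  pose proof (Hlow y' Hy'). lra.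
Qed.

Lemma nearest_point_exists n (T : vec n -> Prop) u y0 : is_closed T -> T y0 ->
  exists p, T p /\ forall y, T y -> vnorm (vsub u p) <= vnorm (vsub u y).
Proof.
  intros HT Hy0.
  destruct (closed_bounded_min_exists n (fun y => T y /\ vnorm (vsub y u) <= vnorm (vsub y0 u)) (fun y => vnorm (vsub u y))
     u (vnorm (vsub y0 u)) 0 y0) as [p [[Tp Hpb] Hp]].
  - apply closed_inter_closed_ball; auto.
  - split; auto; lra.
  - intros y [_ H]; auto.
  - intros; apply vnorm_nonneg.
  - intros y _ eps He. exists eps. split; auto. intros y' _ Hy'.
    pose proof (vnorm_sub_triangle n u y' y). lra.
  - exists p. split; auto. intros y Ty.
    destruct (Rle_dec (vnorm (vsub y u)) (vnorm (vsub y0 u))).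
    + apply Hp; auto.
    + pose proof (Hp y0 (conj Hy0 (Rle_refl _))). rewrite !(vnorm_sub_comm n u) in *. lra.
Qed.

Lemma rdist_nearest_point n (T : vec n -> Prop) u p : T p -> (forall y, T y -> vnorm (vsub u p) <= vnorm (vsub u y)) ->
  rdist u T = vnorm (vsub u p).
Proof.
  intros Tp Hp. destruct (rdist_spec n u T p Tp) as [_ [_ [Hle Happ]]].
  apply Rle_antisym; auto. apply Rnot_lt_le; intros Hl.
  destruct (Happ (vnorm (vsub u p) - rdist u T) ltac:(lra)) as [y [Ty Hy]].
  specialize (Hp y Ty). lra.
Qed.

(** * Differential calculus *)

Lemma C1_on_local_lipschitz n m (W : vec n -> Prop) (g : vec n -> vec m) Dg x : C1_on W g Dg -> W x ->
  exists delta, 0 < delta /\ forall y, vnorm (vsub y x) < delta ->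
    vnorm (vsub (g y) (g x)) <= (mnorm (Dg x) + 1) * vnorm (vsub y x).
Proof.
  intros [Hd _] Wx. destruct (Hd x Wx 1 ltac:(lra)) as [delta [Hdel H]]. exists delta; split; auto.
  intros y Hy. specialize (H y Hy).
  replace (vsub (g y) (g x)) with (vadd (vsub (vsub (g y) (g x)) (mapply (Dg x) (vsub y x))) (mapply (Dg x) (vsub y x))) by vext.
  eapply Rle_trans; [apply vnorm_triangle|]. pose proof (mapply_bound _ _ (Dg x) (vsub y x)). lra.
Qed.

Lemma C1_on_continuous n m (W : vec n -> Prop) (g : vec n -> vec m) Dg x : C1_on W g Dg -> W x ->
  forall eps, 0 < eps -> exists delta, 0 < delta /\ forall y, vnorm (vsub y x) < delta ->
    vnorm (vsub (g y) (g x)) < eps.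
Proof.
  intros HC Wx eps He. destruct (C1_on_local_lipschitz n m W g Dg x HC Wx) as [d [Hd H]].
  pose proof (mnorm_nonneg _ _ (Dg x)).
  exists (Rmin d (eps / (mnorm (Dg x) + 1))). split.
  { apply Rmin_glb_lt; auto. apply Rdiv_lt_0_compat; lra. }
  intros y Hy. specialize (H y (Rlt_le_trans _ _ _ Hy (Rmin_l _ _))).
  pose proof (Rmin_r d (eps / (mnorm (Dg x) + 1))).
  assert (vnorm (vsub y x) < eps / (mnorm (Dg x) + 1)) by lra.
  apply (Rmult_lt_compat_l (mnorm (Dg x) + 1)) in H2; [|lra].
  replace ((mnorm (Dg x) + 1) * (eps / (mnorm (Dg x) + 1))) with eps in H2 by (field; lra). lra.
Qed.

Lemma seq_conv_C1_on n m (W : vec n -> Prop) (g : vec n -> vec m) Dg u x : C1_on W g Dg -> W x ->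
  seq_conv u x -> seq_conv (fun k => g (u k)) (g x).
Proof.
  intros HC Wx Hu e He. destruct (C1_on_continuous n m W g Dg x HC Wx e He) as [d [Hd Hc]].
  apply (eventually_impl (fun k => vnorm (vsub (u k) x) < d)); [intros; apply Hc; auto|].
  apply eventually_conv; auto.
Qed.

Lemma preimage_closed n l (f : vec n -> vec l) Df C : is_C1 f Df -> is_closed C -> is_closed (preimage f C).
Proof.
  intros HC HCl u y Hu Hconv. apply (HCl (fun k => f (u k))); auto.
  apply (seq_conv_C1_on n l (fun _ => True) f Df); auto.
Qed.

Lemma C1_on_jacobian_continuous n m (W : vec n -> Prop) (g : vec n -> vec m) Dg zb : C1_on W g Dg -> W zb ->
  forall e, 0 < e -> exists delta, 0 < delta /\ forall y, W y -> vnorm (vsub y zb) < delta ->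
     forall i j, Rabs (Dg y i j - Dg zb i j) < e.
Proof.
  intros [_ Hc] Wz. apply Hc; auto.
Qed.

Lemma C1_on_jacobian_bounded n m (W : vec n -> Prop) (g : vec n -> vec m) Dg x : C1_on W g Dg -> W x ->
  exists r M, 0 < r /\ 0 <= M /\ forall y, W y -> vnorm (vsub y x) < r -> mnorm (Dg y) <= M.
Proof.
  intros HC Wx. destruct (C1_on_jacobian_continuous n m W g Dg x HC Wx 1 ltac:(lra)) as [r [Hr Hc]].
  exists r, (mnorm (Dg x) + INR m * INR n * 1). split; [auto|split].
  - pose proof (mnorm_nonneg _ _ (Dg x)). pose proof (pos_INR m). pose proof (pos_INR n). nra.
  - intros y Wy Hy. apply mnorm_close. intros i j. left. apply Hc; auto.
Qed.

Lemma seq_conv_jacobian n m (W : vec n -> Prop) (g : vec n -> vec m) Dg u x : C1_on W g Dg -> W x ->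
  (forall k, W (u k)) -> seq_conv u x ->
  forall e, 0 < e -> eventually (fun k => forall i j, Rabs (Dg (u k) i j - Dg x i j) <= e).
Proof.
  intros HC Wx Wu Hu e He. destruct (C1_on_jacobian_continuous n m W g Dg x HC Wx e He) as [d [Hd Hc]].
  apply (eventually_impl (fun k => vnorm (vsub (u k) x) < d)); [intros; left; apply Hc; auto|].
  apply eventually_conv; auto.
Qed.

Lemma C1_on_derivable_line n m (W : vec n -> Prop) (g : vec n -> vec m) Dg y h t0 i :
  C1_on W g Dg -> W (vadd y (vscal t0 h)) ->
  derivable_pt_lim (fun t => g (vadd y (vscal t h)) i) t0 (mapply (Dg (vadd y (vscal t0 h))) h i).
Proof.
  intros [Hd _] Wp eps He. set (p := vadd y (vscal t0 h)) in *.
  pose proof (vnorm_nonneg n h).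
  destruct (Hd p Wp (eps / (vnorm h + 1)) ltac:(apply Rdiv_lt_0_compat; lra)) as [d [Hdp Hdl]].
  assert (Hpos : 0 < d / (vnorm h + 1)) by (apply Rdiv_lt_0_compat; lra).
  exists (mkposreal _ Hpos). simpl. intros t Ht Hlt.
  assert (E : vadd y (vscal (t0 + t) h) = vadd p (vscal t h)) by (unfold p; vext).
  rewrite E. assert (E2 : vsub (vadd p (vscal t h)) p = vscal t h) by vext.
  assert (Hn : vnorm (vsub (vadd p (vscal t h)) p) < d).
  { rewrite E2, vnorm_scal. apply (Rmult_lt_compat_r (vnorm h + 1)) in Hlt; [|lra].
    replace (d / (vnorm h + 1) * (vnorm h + 1)) with d in Hlt by (field; lra). nra. }
  specialize (Hdl _ Hn). rewrite E2, mapply_scal, vnorm_scal in Hdl.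
  pose proof (vnorm_coord m (vsub (vsub (g (vadd p (vscal t h))) (g p)) (vscal t (mapply (Dg p) h))) i) as Hc.
  unfold vsub at 1 in Hc. unfold vsub at 1 in Hc. unfold vscal at 1 in Hc. cbv beta in Hc.
  assert (Hat : 0 < Rabs t) by (apply Rabs_pos_lt; auto).
  replace ((g (vadd p (vscal t h)) i - g p i) / t - mapply (Dg p) h i)
    with ((g (vadd p (vscal t h)) i - g p i - t * mapply (Dg p) h i) / t) by (field; auto).
  unfold Rdiv. rewrite Rabs_mult, Rabs_inv.
  apply (Rmult_lt_reg_r (Rabs t)); auto. rewrite Rmult_assoc, Rinv_l by lra.
  eapply Rle_lt_trans; [rewrite Rmult_1_r; apply Hc|]. eapply Rle_lt_trans; [apply Hdl|].
  assert (eps / (vnorm h + 1) * vnorm h < eps).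
  { apply (Rmult_lt_reg_r (vnorm h + 1)); [lra|].
    replace (eps / (vnorm h + 1) * vnorm h * (vnorm h + 1)) with (eps * vnorm h) by (field; lra). nra. }
  nra.
Qed.

Lemma derivable_pt_lim_sumF n (F : R -> Fin.t n -> R) F' t0 :
  (forall i, derivable_pt_lim (fun t => F t i) t0 (F' i)) ->
  derivable_pt_lim (fun t => sumF n (F t)) t0 (sumF n F').
Proof.
  revert F F'; induction n; intros F F' H; simpl.
  - apply derivable_pt_lim_const.
  - apply (derivable_pt_lim_plus (fun t => F t Fin.F1) (fun t => sumF n (fun i => F t (Fin.FS i)))).
    + apply H.
    + apply (IHn (fun t i => F t (Fin.FS i))). intros; apply H.
Qed.

Lemma derivable_pt_lim_eq f x l l' : derivable_pt_lim f x l -> l = l' -> derivable_pt_lim f x l'.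
Proof.
  intros; subst; auto.
Qed.

Lemma derivable_pt_lim_inner_self m (u : R -> vec m) (u' : vec m) t0 :
  (forall i, derivable_pt_lim (fun t => u t i) t0 (u' i)) ->
  derivable_pt_lim (fun t => inner (u t) (u t)) t0 (2 * inner (u t0) u').
Proof.
  intros H. unfold inner.
  apply derivable_pt_lim_eq with (sumF m (fun i => u' i * u t0 i + u t0 i * u' i)).
  - apply (derivable_pt_lim_sumF m (fun t i => u t i * u t i)). intros i.
    apply (derivable_pt_lim_mult (fun t => u t i) (fun t => u t i)); apply H.
  - rewrite <- sumF_scal. apply sumF_ext; intros; ring.
Qed.

Lemma derivable_pt_lim_line_coord n (y h x : vec n) i t0 :
  derivable_pt_lim (fun t => vsub (vadd y (vscal t h)) x i) t0 (h i).
Proof.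
  intros eps He. exists (mkposreal 1 Rlt_0_1). intros t Ht _. unfold vsub, vadd, vscal.
  replace ((y i + (t0 + t) * h i - x i - (y i + t0 * h i - x i)) / t - h i) with 0 by (field; auto).
  rewrite Rabs_R0; auto.
Qed.

Lemma derivable_pt_lim_minus_const (f : R -> R) c t0 l : derivable_pt_lim f t0 l ->
  derivable_pt_lim (fun t => f t - c) t0 l.
Proof.
  intros H eps He. destruct (H eps He) as [d Hd]. exists d. intros t Ht Hlt.
  replace ((f (t0 + t) - c - (f t0 - c)) / t) with ((f (t0 + t) - f t0) / t) by (field; auto). auto.
Qed.

Lemma derivable_pt_lim_plus_const (f : R -> R) c t0 l : derivable_pt_lim f t0 l ->
  derivable_pt_lim (fun t => f t + c) t0 l.
Proof.
  intros H eps He. destruct (H eps He) as [d Hd]. exists d. intros t Ht Hlt.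
  replace ((f (t0 + t) + c - (f t0 + c)) / t) with ((f (t0 + t) - f t0) / t) by (field; auto). auto.
Qed.

Lemma ball_segment n (z c zb : vec n) rho t : vnorm (vsub z zb) < rho -> vnorm (vsub c zb) < rho -> 0 <= t <= 1 ->
  vnorm (vsub (vadd z (vscal t (vsub c z))) zb) < rho.
Proof.
  intros Hz Hc Ht.
  replace (vsub (vadd z (vscal t (vsub c z))) zb) with (vadd (vscal (1-t) (vsub z zb)) (vscal t (vsub c zb))) by vext.
  eapply Rle_lt_trans; [apply vnorm_triangle|]. rewrite !vnorm_scal, !Rabs_right by lra.
  destruct (Req_dec t 0). subst; lra. nra.
Qed.

Lemma C1_on_uniform_differentiable n m (W : vec n -> Prop) (g : vec n -> vec m) Dg zb rho0 :
  C1_on W g Dg -> W zb -> 0 < rho0 -> (forall y, vnorm (vsub y zb) < rho0 -> W y) ->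
  forall theta, 0 < theta -> exists rho, 0 < rho /\ rho <= rho0 /\ forall z c,
    vnorm (vsub z zb) < rho -> vnorm (vsub c zb) < rho ->
    vnorm (vsub (vsub (g c) (g z)) (mapply (Dg z) (vsub c z))) <= theta * vnorm (vsub c z).
Proof.
  intros HC Wz Hr0 HW theta Hth.
  destruct (exists_pos_mul_le (2 * (INR m * INR n)) theta
              ltac:(pose proof (pos_INR m); pose proof (pos_INR n); nra) Hth) as [e [He Hmn]].
  destruct (C1_on_jacobian_continuous n m W g Dg zb HC Wz e He) as [d [Hd Hdc]].
  exists (Rmin d rho0). split; [apply Rmin_glb_lt; auto|]. split; [apply Rmin_r|].
  intros z c Hz Hc. pose proof (Rmin_l d rho0); pose proof (Rmin_r d rho0).
  set (h := vsub c z).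
  assert (Hcoord : forall i, Rabs (vsub (vsub (g c) (g z)) (mapply (Dg z) h) i) <= INR n * (2 * e) * vnorm h).
  { intros i.
    assert (Hder : forall t, 0 <= t <= 1 -> derivable_pt_lim (fun t => g (vadd z (vscal t h)) i) t (mapply (Dg (vadd z (vscal t h))) h i)).
    { intros t Ht. apply (C1_on_derivable_line n m W); auto. apply HW. unfold h. pose proof (ball_segment n z c zb (Rmin d rho0) t Hz Hc Ht). lra. }
    destruct (MVT_cor2 (fun t => g (vadd z (vscal t h)) i) (fun t => mapply (Dg (vadd z (vscal t h))) h i) 0 1 ltac:(lra) Hder) as [xi [Hxi Hxir]].
    assert (E1 : vadd z (vscal 1 h) = c) by (unfold h; vext). assert (E0 : vadd z (vscal 0 h) = z) by (unfold h; vext).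
    rewrite E1, E0 in Hxi. unfold vsub at 1. unfold vsub at 1. cbv beta. rewrite Hxi. replace (1 - 0) with 1 by ring. rewrite Rmult_1_r.
    set (p := vadd z (vscal xi h)).
    assert (Hp : vnorm (vsub p zb) < Rmin d rho0) by (apply ball_segment; auto; lra).
    unfold mapply. rewrite <- sumF_minus. eapply Rle_trans; [apply sumF_abs|].
    rewrite Rmult_assoc, <- sumF_const. apply sumF_le; intros j.
    replace (Dg p i j * h j - Dg z i j * h j) with ((Dg p i j - Dg z i j) * h j) by ring.
    rewrite Rabs_mult. pose proof (vnorm_coord n h j).
    assert (Rabs (Dg p i j - Dg z i j) <= 2 * e).
    { pose proof (Hdc p (HW p ltac:(lra)) ltac:(lra) i j). pose proof (Hdc z (HW z ltac:(lra)) ltac:(lra) i j).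
      replace (Dg p i j - Dg z i j) with ((Dg p i j - Dg zb i j) - (Dg z i j - Dg zb i j)) by ring.
      eapply Rle_trans; [apply Rabs_triang|]. rewrite Rabs_Ropp. lra. }
    pose proof (Rabs_pos (Dg p i j - Dg z i j)). pose proof (Rabs_pos (h j)). nra. }
  eapply Rle_trans; [apply vnorm_le_sumabs|].
  eapply Rle_trans. { apply sumF_le. intros i. apply Hcoord. }
  rewrite sumF_const. fold h. pose proof (vnorm_nonneg n h).
  assert (INR m * (INR n * (2 * e)) <= theta) by lra.
  nra.
Qed.

Lemma derivable_pt_lim_ge_of_increments (F : R -> R) a d T : 0 < T -> derivable_pt_lim F 0 d ->
  (forall t, 0 < t < T -> t * a <= F t - F 0) -> a <= d.
Proof.
  intros HT HF Hinc. apply Rnot_lt_le; intros Hlt.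
  destruct (HF (a - d) ltac:(lra)) as [dl Hdl].
  set (t := Rmin (dl / 2) (T / 2)).
  assert (Ht : 0 < t) by (apply Rmin_glb_lt; pose proof (cond_pos dl); lra).
  assert (Ht1 : t <= dl / 2) by apply Rmin_l. assert (Ht2 : t <= T / 2) by apply Rmin_r.
  assert (Hta : Rabs t < dl) by (rewrite Rabs_right by lra; pose proof (cond_pos dl); lra).
  specialize (Hdl t ltac:(lra) Hta). replace (0 + t) with t in Hdl by ring.
  apply Rabs_def2 in Hdl. destruct Hdl as [Hdl _].
  assert (Hq : (F t - F 0) / t < a) by lra.
  apply (Rmult_lt_compat_r t) in Hq; auto.
  replace ((F t - F 0) / t * t) with (F t - F 0) in Hq by (field; lra).
  specialize (Hinc t ltac:(lra)). lra.
Qed.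

(** * Normal cones *)

Lemma reg_normal_local n (S1 S2 : vec n -> Prop) x v r : 0 < r ->
  (forall y, vnorm (vsub y x) < r -> (S1 y <-> S2 y)) -> reg_normal S1 x v -> reg_normal S2 x v.
Proof.
  intros Hr Heq [Sx Hv]. split.
  - apply Heq; auto. rewrite vnorm_sub_self; lra.
  - intros e He. destruct (Hv e He) as [d [Hd H]]. exists (Rmin d r). split; [apply Rmin_glb_lt; auto|].
    intros y Sy Hy. apply H. apply Heq; auto. eapply Rlt_le_trans; [apply Hy|apply Rmin_r].
    eapply Rlt_le_trans; [apply Hy|apply Rmin_l].
Qed.

Lemma reg_normal_lim_normal n (S : vec n -> Prop) p w : reg_normal S p w -> lim_normal S p w.
Proof.
  intros H. split; [apply H|]. exists (fun _ => p), (fun _ => w). split; [intros; apply H|].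
  split; [intros e He; exists 0%nat; intros; rewrite vnorm_sub_self; lra|].
  split; [intros e He; exists 0%nat; intros; rewrite vnorm_sub_self; lra|]. intros; auto.
Qed.

Lemma reg_normal_scal n (S : vec n -> Prop) z v tau : 0 <= tau -> reg_normal S z v ->
  reg_normal S z (vscal tau v).
Proof.
  intros Ht [Sz Hr]. split; auto. intros e He.
  destruct (Hr (e / (tau + 1)) ltac:(apply Rdiv_lt_0_compat; lra)) as [d [Hd H]]. exists d. split; auto.
  intros y Sy Hy. rewrite inner_scal_l. specialize (H y Sy Hy). pose proof (vnorm_nonneg n (vsub y z)).
  apply Rle_trans with (tau * (e / (tau + 1) * vnorm (vsub y z))); [apply Rmult_le_compat_l; lra|].
  rewrite <- Rmult_assoc. apply Rmult_le_compat_r; auto.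
  apply Rle_trans with ((tau + 1) * (e / (tau + 1))); [|right; field; lra].
  apply Rmult_le_compat_r; [left; apply Rdiv_lt_0_compat; lra|lra].
Qed.

Lemma lim_normal_scal n (S : vec n -> Prop) z v tau : 0 <= tau -> lim_normal S z v ->
  lim_normal S z (vscal tau v).
Proof.
  intros Ht [Sz [zk [vk [Hzk [Hzc [Hvc Hreg]]]]]]. split; auto.
  exists zk, (fun k => vscal tau (vk k)). split; auto. split; auto. split.
  - apply seq_conv_scal; auto.
  - intros k. apply reg_normal_scal; auto.
Qed.

Lemma lim_normal_zero n (S : vec n -> Prop) z : S z -> lim_normal S z (fun _ => 0).
Proof.
  intros Sz. apply reg_normal_lim_normal. split; auto. intros e He. exists 1. split; [lra|]. intros y _ _.
  rewrite inner_zero_l. pose proof (vnorm_nonneg n (vsub y z)). nra.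
Qed.

Lemma nearest_point_reg_normal n (S : vec n -> Prop) u p a : S p -> 0 <= a ->
  (forall y, S y -> vnorm (vsub u p) <= vnorm (vsub u y)) ->
  reg_normal S p (vscal a (vsub u p)).
Proof.
  intros Sp Ha Hp. split; auto. intros e He.
  exists (2 * e / (a + 1)). split; [apply Rdiv_lt_0_compat; lra|].
  intros c Sc Hc. rewrite inner_scal_l.
  pose proof (nearest_point_inner_le n u p c (Hp c Sc)).
  pose proof (vnorm_nonneg n (vsub c p)).
  assert (a * vnorm (vsub c p) <= 2 * e).
  { apply Rle_trans with ((a + 1) * vnorm (vsub c p)); [nra|].
    apply (Rmult_lt_compat_l (a + 1)) in Hc; [|lra].
    replace ((a + 1) * (2 * e / (a + 1))) with (2 * e) in Hc by (field; lra). lra. }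
  apply Rle_trans with (a * (/ 2 * (vnorm (vsub c p) * vnorm (vsub c p)))); [apply Rmult_le_compat_l; auto|].
  nra.
Qed.

Lemma nearest_point_scaled_normal m (K : vec m -> Prop) u z0 c s : K z0 -> 0 <= c -> 0 < s ->
  (forall z, K z -> vnorm (vsub u z0) <= vnorm (vsub u z)) -> vnorm (vsub u z0) <= s ->
  reg_normal K z0 (vscal (c / s) (vsub u z0)) /\ vnorm (vscal (c / s) (vsub u z0)) <= c.
Proof.
  intros Kz0 Hc Hs Hz0 Hus.
  assert (Hcs : 0 <= c / s) by (unfold Rdiv; apply Rmult_le_pos; [lra|left; apply Rinv_0_lt_compat; lra]).
  split; [apply nearest_point_reg_normal; auto|].
  rewrite vnorm_scal, Rabs_right by lra.
  apply Rle_trans with (c / s * s); [apply Rmult_le_compat_l; auto|right; field; lra].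
Qed.

Lemma convex_reg_normal_ineq n (Q : vec n -> Prop) b0 mu : is_convex Q -> reg_normal Q b0 mu ->
  forall b, Q b -> inner mu (vsub b b0) <= 0.
Proof.
  intros Hcv [Qb0 Hreg] b Qb. apply Rnot_lt_le; intros Hc.
  set (c := inner mu (vsub b b0)). set (D := vnorm (vsub b b0)).
  assert (HD : 0 < D).
  { destruct (Rle_lt_or_eq_dec 0 D (vnorm_nonneg _ _)) as [Hl|E]; auto. symmetry in E.
    apply vnorm_eq0 in E. unfold c in Hc. rewrite E, inner_zero_r in Hc. lra. }
  assert (Hc2 : 0 < c) by exact Hc.
  assert (Hcd : 0 < c / (2 * D)) by (apply Rdiv_lt_0_compat; lra).
  destruct (Hreg (c / (2 * D)) Hcd) as [dd [Hd H]].
  set (t := Rmin 1 (dd / (2 * D))). assert (Ht : 0 < t) by (apply Rmin_glb_lt; [lra|apply Rdiv_lt_0_compat; lra]).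
  assert (Ht1 : t <= 1) by apply Rmin_l. assert (Ht2 : t <= dd / (2 * D)) by apply Rmin_r.
  set (bt := vadd (vscal t b) (vscal (1 - t) b0)).
  assert (Qbt : Q bt) by (apply Hcv; auto; lra).
  assert (E : vsub bt b0 = vscal t (vsub b b0)) by (unfold bt; vext).
  assert (Hn : vnorm (vsub bt b0) < dd).
  { rewrite E, vnorm_scal, Rabs_right by lra. fold D.
    apply Rle_lt_trans with (dd / (2 * D) * D); [apply Rmult_le_compat_r; lra|].
    replace (dd / (2 * D) * D) with (dd/2) by (field; lra). lra. }
  specialize (H bt Qbt Hn). rewrite E, inner_scal_r, vnorm_scal, Rabs_right in H by lra. fold c D in H.
  replace (c / (2 * D) * (t * D)) with (t * (c / 2)) in H by (field; lra). nra.
Qed.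

Lemma convex_lim_normal_ineq n (Q : vec n -> Prop) b mu : is_convex Q -> lim_normal Q b mu ->
  forall b', Q b' -> inner mu (vsub b' b) <= 0.
Proof.
  intros Hcv [Qb [bk [mk [Hbk [Hbc [Hmc Hreg]]]]]] b' Qb'.
  apply le_of_le_plus_eps. intros e He.
  pose proof (vnorm_nonneg n mu). pose proof (vnorm_nonneg n (vsub b' b)).
  set (e2 := e / (2 * (vnorm (vsub b' b) + vnorm mu + 2))).
  assert (He2 : 0 < e2) by (unfold e2; apply Rdiv_lt_0_compat; lra).
  set (e3 := Rmin e2 1). assert (He3 : 0 < e3) by (apply Rmin_glb_lt; lra).
  assert (He3a : e3 <= e2) by apply Rmin_l. assert (He3b : e3 <= 1) by apply Rmin_r.
  destruct (eventually_witness _ (eventually_and _ _ (eventually_conv n bk b e3 Hbc He3) (eventually_conv n mk mu e3 Hmc He3))) as [k [H1 H2]].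
  pose proof (convex_reg_normal_ineq n Q (bk k) (mk k) Hcv (Hreg k) b' Qb').
  assert (E : inner mu (vsub b' b) = inner (mk k) (vsub b' (bk k)) + inner (vsub mu (mk k)) (vsub b' b) + inner (mk k) (vsub (bk k) b)).
  { rewrite inner_sub_l. rewrite !inner_sub_r. ring. }
  rewrite E.
  pose proof (inner_le_vnorm n (vsub mu (mk k)) (vsub b' b)).
  pose proof (inner_le_vnorm n (mk k) (vsub (bk k) b)).
  rewrite vnorm_sub_comm in H2.
  assert (vnorm (mk k) <= vnorm mu + 1).
  { pose proof (vnorm_sub_triangle n (mk k) mu (fun _ => 0)).
    replace (vsub (mk k) (fun _ => 0)) with (mk k) in H6 by vext. replace (vsub mu (fun _ => 0)) with mu in H6 by vext.
    rewrite vnorm_sub_comm in H6. lra. }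
  assert (vnorm (vsub mu (mk k)) * vnorm (vsub b' b) <= e3 * vnorm (vsub b' b)) by (apply Rmult_le_compat_r; lra).
  assert (vnorm (mk k) * vnorm (vsub (bk k) b) <= (vnorm mu + 1) * e3) by (apply Rmult_le_compat; try lra; apply vnorm_nonneg).
  assert (e3 * (vnorm (vsub b' b) + vnorm mu + 1) <= e / 2).
  { apply Rle_trans with (e2 * (vnorm (vsub b' b) + vnorm mu + 2)); [apply Rmult_le_compat; lra|].
    unfold e2. right; field; lra. }
  nra.
Qed.

(** * Exact penalization and the representation of normals *)

(* [v] is a regular normal to [S] at [x] iff, for every [e > 0], the defect is nonnegative on [S] near [x]. *)
Definition normal_defect {n} (v x : vec n) (e : R) (y : vec n) : R :=
  - inner v (vsub y x) + e * vnorm (vsub y x).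

Lemma normal_defect_lipschitz n (v x : vec n) e y s : 0 <= e ->
  normal_defect v x e s - (vnorm v + e) * vnorm (vsub y s) <= normal_defect v x e y.
Proof.
  intros He. unfold normal_defect.
  assert (inner v (vsub y x) - inner v (vsub s x) = inner v (vsub y s))
    by (rewrite <- inner_sub_r; f_equal; vext).
  pose proof (inner_le_vnorm n v (vsub y s)).
  pose proof (vnorm_sub_triangle n s y x). rewrite (vnorm_sub_comm n s y) in H1.
  pose proof (vnorm_nonneg n (vsub y s)).
  assert (e * vnorm (vsub s x) <= e * (vnorm (vsub y s) + vnorm (vsub y x))) by (apply Rmult_le_compat_l; lra).
  lra.
Qed.

Lemma normal_defect_self n (v x : vec n) e : normal_defect v x e x = 0.
Proof.
  unfold normal_defect. rewrite vnorm_sub_self.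
  replace (vsub x x) with (fun _ : Fin.t n => 0) by vext. rewrite inner_zero_r. ring.
Qed.

Lemma normal_defect_step n (v x y : vec n) e h t : 0 <= e -> 0 <= t ->
  normal_defect v x e (vadd y (vscal t h)) - normal_defect v x e y <= t * (- inner v h + e * vnorm h).
Proof.
  intros He Ht. unfold normal_defect.
  replace (vsub (vadd y (vscal t h)) x) with (vadd (vsub y x) (vscal t h)) by vext.
  rewrite inner_add_r, inner_scal_r.
  pose proof (vnorm_triangle n (vsub y x) (vscal t h)). rewrite vnorm_scal, Rabs_right in H by lra.
  assert (e * vnorm (vadd (vsub y x) (vscal t h)) <= e * (vnorm (vsub y x) + t * vnorm h))
    by (apply Rmult_le_compat_l; lra).
  lra.
Qed.

Lemma lipschitz_ge_neg_dist n (S : vec n -> Prop) (phi : vec n -> R) L x rho y :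
  0 <= L -> S x -> (forall y s, phi s - L * vnorm (vsub y s) <= phi y) ->
  (forall s, S s -> vnorm (vsub s x) < rho -> 0 <= phi s) ->
  vnorm (vsub y x) < rho / 3 -> - (L * rdist y S) <= phi y.
Proof.
  intros HL Sx Hlip Hpos Hy.
  destruct (rdist_spec n y S x Sx) as [_ [_ [Hle Happ]]].
  pose proof (Hle x Sx). pose proof (vnorm_nonneg n (vsub y x)).
  apply Ropp_le_cancel. rewrite Ropp_involutive.
  apply (le_of_le_plus_lin _ _ L (rho / 3)); [lra|lra|]. intros tau Htau.
  destruct (Happ tau ltac:(lra)) as [s [Ss Hs]].
  assert (Hsx : vnorm (vsub s x) < rho).
  { pose proof (vnorm_sub_triangle n s y x) as Htri. rewrite (vnorm_sub_comm n s y) in Htri. lra. }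
  specialize (Hpos s Ss Hsx). specialize (Hlip y s).
  assert (L * vnorm (vsub y s) <= L * (rdist y S + tau)) by (apply Rmult_le_compat_l; lra).
  lra.
Qed.

Lemma reg_normal_penalty n m (W : vec n -> Prop) (g : vec n -> vec m) (K : vec m -> Prop)
    kappa x v rho_s e :
  0 <= kappa -> 0 < rho_s -> K (g x) ->
  (forall y, vnorm (vsub y x) < rho_s -> W y /\
     Rbar_le (dist y (fun y => W y /\ K (g y))) (Rbar_scal kappa (dist (g y) K))) ->
  reg_normal (fun y => W y /\ K (g y)) x v -> 0 < e ->
  exists r, 0 < r /\ r <= rho_s /\ forall y, vnorm (vsub y x) < r ->
    - ((vnorm v + e) * kappa * rdist (g y) K) <= normal_defect v x e y.
Proof.
  intros Hk Hrs Kx Hsub [Sx Hv] He.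
  destruct (Hv e He) as [rho [Hrho Hreg]].
  exists (Rmin (rho / 3) rho_s). split; [apply Rmin_glb_lt; lra|]. split; [apply Rmin_r|].
  intros y Hy. pose proof (Rmin_l (rho / 3) rho_s). pose proof (Rmin_r (rho / 3) rho_s).
  destruct (Hsub y ltac:(lra)) as [_ Hb].
  apply (Rbar_le_dist_rdist n m _ K y (g y) kappa x (g x) Sx Kx) in Hb.
  assert (Hd : - ((vnorm v + e) * rdist y (fun y => W y /\ K (g y))) <= normal_defect v x e y).
  { apply (lipschitz_ge_neg_dist n _ _ (vnorm v + e) x rho y).
    - pose proof (vnorm_nonneg n v). lra.
    - exact Sx.
    - intros; apply normal_defect_lipschitz; lra.
    - intros s Ss Hs. specialize (Hreg s Ss Hs). unfold normal_defect. lra.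
    - lra. }
  assert (0 <= vnorm v + e) by (pose proof (vnorm_nonneg n v); lra).
  assert ((vnorm v + e) * rdist y (fun y => W y /\ K (g y)) <= (vnorm v + e) * (kappa * rdist (g y) K))
    by (apply Rmult_le_compat_l; auto).
  lra.
Qed.

Definition smoothed_dist {m} (K : vec m -> Prop) (eta : R) (z : vec m) : R :=
  sqrt (rdist z K * rdist z K + eta * eta).

Lemma smoothed_dist_ge m (K : vec m -> Prop) eta z z0 : K z0 -> rdist z K <= smoothed_dist K eta z.
Proof.
  intros Kz0. apply sqrt_plus_sq_ge. eapply rdist_nonneg; eauto.
Qed.

Lemma smoothed_dist_in m (K : vec m -> Prop) eta z : 0 <= eta -> K z -> smoothed_dist K eta z = eta.
Proof.
  intros He Kz. unfold smoothed_dist. rewrite rdist_self by auto. apply sqrt_0_plus_sq; auto.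
Qed.

Lemma smoothed_dist_lip m (K : vec m -> Prop) eta a b z0 : K z0 ->
  Rabs (smoothed_dist K eta a - smoothed_dist K eta b) <= vnorm (vsub a b).
Proof.
  intros Kz0. unfold smoothed_dist. eapply Rle_trans; [apply sqrt_plus_sq_lip; eapply rdist_nonneg; eauto|].
  apply (rdist_lip_abs m _ _ K z0 Kz0).
Qed.

Lemma smoothed_dist_le m (K : vec m -> Prop) eta u z : K z ->
  smoothed_dist K eta u <= sqrt (inner (vsub u z) (vsub u z) + eta * eta).
Proof.
  intros Kz. unfold smoothed_dist. apply sqrt_le_1_alt.
  pose proof (rdist_le m u K z Kz). pose proof (rdist_nonneg m u K z Kz).
  rewrite <- vnorm_sq. nra.
Qed.

Section Penalization.
Variables (n m : nat) (W : vec n -> Prop) (g : vec n -> vec m) (Dg : vec n -> mat m n)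
  (K : vec m -> Prop).
Hypothesis HC : C1_on W g Dg.

Definition penalized (phi : vec n -> R) (c eta : R) (x y : vec n) : R :=
  phi y + c * smoothed_dist K eta (g y) + inner (vsub y x) (vsub y x).

Variables (phi : vec n -> R) (L c eta : R) (x : vec n) (zK : vec m).
Hypotheses (HKz : K zK) (Hc : 0 <= c) (HL : 0 <= L)
  (Hlip : forall y s, phi s - L * vnorm (vsub y s) <= phi y).

Lemma penalized_continuous r y : W y -> vnorm (vsub y x) <= r ->
  forall e, 0 < e -> exists d, 0 < d /\ forall y', vnorm (vsub y' x) <= r -> vnorm (vsub y' y) < d ->
    penalized phi c eta x y <= penalized phi c eta x y' + e.
Proof.
  intros Wy Hyr e He.
  set (eg := e / (3 * (c + 1))). assert (Heg : 0 < eg) by (unfold eg; apply Rdiv_lt_0_compat; lra).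
  destruct (C1_on_continuous n m W g Dg y HC Wy eg Heg) as [d1 [Hd1 Hc1]].
  pose proof (vnorm_nonneg n (vsub y x)).
  set (e3 := e / (3 * (L + 2 * r + 1))). assert (He3 : 0 < e3) by (unfold e3; apply Rdiv_lt_0_compat; lra).
  exists (Rmin d1 e3). split; [apply Rmin_glb_lt; lra|].
  intros y' Hy'r Hyy.
  assert (Hy1 : vnorm (vsub y' y) < d1) by (eapply Rlt_le_trans; [apply Hyy|apply Rmin_l]).
  assert (Hy2 : vnorm (vsub y' y) < e3) by (eapply Rlt_le_trans; [apply Hyy|apply Rmin_r]).
  unfold penalized. pose proof (Hlip y' y) as Hl1.
  assert (Hs : Rabs (smoothed_dist K eta (g y) - smoothed_dist K eta (g y')) <= eg).
  { eapply Rle_trans; [apply (smoothed_dist_lip m K eta _ _ zK HKz)|].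
    rewrite vnorm_sub_comm. left; apply Hc1; auto. }
  assert (Hin : inner (vsub y x) (vsub y x) - inner (vsub y' x) (vsub y' x) <= 2 * r * vnorm (vsub y' y)).
  { rewrite <- !vnorm_sq. pose proof (vnorm_sub_triangle n y y' x) as Htri.
    rewrite (vnorm_sub_comm n y y') in Htri.
    pose proof (vnorm_nonneg n (vsub y' x)). pose proof (vnorm_nonneg n (vsub y' y)).
    destruct (Rle_dec (vnorm (vsub y x)) (vnorm (vsub y' x))); nra. }
  pose proof (Rle_abs (smoothed_dist K eta (g y) - smoothed_dist K eta (g y'))).
  assert (c * (smoothed_dist K eta (g y) - smoothed_dist K eta (g y')) <= c * eg)
    by (apply Rmult_le_compat_l; lra).
  assert (c * eg <= e / 3).
  { unfold eg. apply Rle_trans with ((c + 1) * (e / (3 * (c + 1)))).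
    - apply Rmult_le_compat_r; [left; apply Rdiv_lt_0_compat; lra|lra].
    - right; field; lra. }
  assert ((L + 2 * r) * vnorm (vsub y' y) <= e / 3).
  { apply Rle_trans with ((L + 2 * r + 1) * e3).
    - pose proof (vnorm_nonneg n (vsub y' y)). nra.
    - unfold e3; right; field; lra. }
  lra.
Qed.

Lemma penalized_min_exists r : 0 < r -> (forall y, vnorm (vsub y x) <= r -> W y) ->
  exists y0, vnorm (vsub y0 x) <= r /\
    forall y, vnorm (vsub y x) <= r -> penalized phi c eta x y0 <= penalized phi c eta x y.
Proof.
  intros Hr HW.
  destruct (closed_bounded_min_exists n (fun y => True /\ vnorm (vsub y x) <= r) (penalized phi c eta x)
              x r (phi x - L * r) x) as [y0 [[_ Hy0] Hmin]].
  - apply closed_inter_closed_ball. intros u z _ _; auto.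
  - split; auto. rewrite vnorm_sub_self; lra.
  - intros y [_ Hy]; auto.
  - intros y [_ Hy]. unfold penalized. pose proof (Hlip y x).
    assert (0 <= c * smoothed_dist K eta (g y)) by (apply Rmult_le_pos; [lra|apply sqrt_pos]).
    pose proof (inner_self_nonneg n (vsub y x)).
    assert (L * vnorm (vsub y x) <= L * r) by (apply Rmult_le_compat_l; lra).
    lra.
  - intros y [_ Hy] e He.
    destruct (penalized_continuous r y (HW y Hy) Hy e He) as [d [Hd Hcont]].
    exists d. split; auto. intros y' [_ Hy'] Hyy. auto.
  - exists y0. split; [exact Hy0|]. intros y Hy. apply Hmin. split; auto.
Qed.

Lemma derivable_penalty_along_line (y0 h : vec n) (z0 : vec m) : W y0 -> 0 < eta ->
  derivable_pt_lim
    (fun t => c * sqrt (inner (vsub (g (vadd y0 (vscal t h))) z0) (vsub (g (vadd y0 (vscal t h))) z0) + eta * eta)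
              + inner (vsub (vadd y0 (vscal t h)) x) (vsub (vadd y0 (vscal t h)) x)) 0
    (inner (vadd (mtapply (Dg y0) (vscal (c / sqrt (inner (vsub (g y0) z0) (vsub (g y0) z0) + eta * eta))
                                          (vsub (g y0) z0)))
                 (vscal 2 (vsub y0 x))) h).
Proof.
  intros Wy0 Heta.
  set (u := fun t => vsub (g (vadd y0 (vscal t h))) z0).
  set (w := fun t => vsub (vadd y0 (vscal t h)) x).
  assert (E0 : vadd y0 (vscal 0 h) = y0) by vext.
  assert (Hu0 : u 0 = vsub (g y0) z0) by (unfold u; rewrite E0; auto).
  assert (Hw0 : w 0 = vsub y0 x) by (unfold w; rewrite E0; auto).
  set (s0 := sqrt (inner (u 0) (u 0) + eta * eta)).
  assert (Hs0 : 0 < s0) by (apply sqrt_lt_R0; pose proof (inner_self_nonneg m (u 0)); nra).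
  assert (Hu' : forall i, derivable_pt_lim (fun t => u t i) 0 (mapply (Dg y0) h i)).
  { intros i. unfold u, vsub at 1.
    apply (derivable_pt_lim_minus_const (fun t => g (vadd y0 (vscal t h)) i)).
    pose proof (C1_on_derivable_line n m W g Dg y0 h 0 i HC ltac:(rewrite E0; auto)) as Hd.
    rewrite E0 in Hd. auto. }
  assert (HS : derivable_pt_lim (fun t => sqrt (inner (u t) (u t) + eta * eta)) 0
                 (/ (2 * s0) * (2 * inner (u 0) (mapply (Dg y0) h)))).
  { apply (derivable_pt_lim_comp (fun t => inner (u t) (u t) + eta * eta) sqrt).
    - apply (derivable_pt_lim_plus_const (fun t => inner (u t) (u t))). apply derivable_pt_lim_inner_self; auto.
    - apply derivable_pt_lim_sqrt. pose proof (inner_self_nonneg m (u 0)). nra. }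
  assert (HB : derivable_pt_lim (fun t => inner (w t) (w t)) 0 (2 * inner (w 0) h)).
  { apply derivable_pt_lim_inner_self. intros i. apply derivable_pt_lim_line_coord. }
  apply derivable_pt_lim_eq with (c * (/ (2 * s0) * (2 * inner (u 0) (mapply (Dg y0) h))) + 2 * inner (w 0) h).
  - apply (derivable_pt_lim_plus (fun t => c * sqrt (inner (u t) (u t) + eta * eta)) (fun t => inner (w t) (w t))); auto.
    apply (derivable_pt_lim_scal (fun t => sqrt (inner (u t) (u t) + eta * eta))); auto.
  - fold s0. rewrite <- Hu0, <- Hw0. fold s0.
    rewrite inner_add_l, inner_scal_l, inner_mtapply, inner_scal_l. field. lra.
Qed.

Lemma penalized_min_stationary v e r y0 z0 : 0 < eta -> 0 <= e ->
  (forall y h t, 0 <= t -> phi (vadd y (vscal t h)) - phi y <= t * (- inner v h + e * vnorm h)) ->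
  W y0 -> vnorm (vsub y0 x) < r -> K z0 ->
  (forall z, K z -> vnorm (vsub (g y0) z0) <= vnorm (vsub (g y0) z)) ->
  (forall y, vnorm (vsub y x) <= r -> penalized phi c eta x y0 <= penalized phi c eta x y) ->
  vnorm (vsub v (vadd (mtapply (Dg y0) (vscal (c / smoothed_dist K eta (g y0)) (vsub (g y0) z0)))
                      (vscal 2 (vsub y0 x)))) <= e.
Proof.
  intros Heta He Hstep Wy0 Hy0 Kz0 Hz0 Hmin.
  assert (Hsd : smoothed_dist K eta (g y0) = sqrt (inner (vsub (g y0) z0) (vsub (g y0) z0) + eta * eta)).
  { unfold smoothed_dist. rewrite (rdist_nearest_point m K (g y0) z0 Kz0 Hz0), vnorm_sq. reflexivity. }
  apply vnorm_sub_le_of_inner_le; auto. intros h. rewrite Hsd.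
  (* along [y0 + t h] the penalty is dominated by the smooth function [sqrt (|g y - z0|^2 + eta^2)],
     with equality at [t = 0]; [eta > 0] is what makes it differentiable *)
  pose proof (vnorm_nonneg n h).
  apply (derivable_pt_lim_ge_of_increments _ _ _ ((r - vnorm (vsub y0 x)) / (vnorm h + 1))
           ltac:(apply Rdiv_lt_0_compat; lra) (derivable_penalty_along_line y0 h z0 Wy0 Heta)).
  intros t Ht. set (y' := vadd y0 (vscal t h)).
  assert (Hth : t * vnorm h <= r - vnorm (vsub y0 x)).
  { apply Rle_trans with (t * (vnorm h + 1)); [nra|].
    destruct Ht as [_ Ht]. apply (Rmult_lt_compat_r (vnorm h + 1)) in Ht; [|lra].
    replace ((r - vnorm (vsub y0 x)) / (vnorm h + 1) * (vnorm h + 1)) with (r - vnorm (vsub y0 x))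
      in Ht by (field; lra). lra. }
  assert (Hy'x : vnorm (vsub y' x) <= r).
  { replace (vsub y' x) with (vadd (vsub y0 x) (vscal t h)) by (unfold y'; vext).
    eapply Rle_trans; [apply vnorm_triangle|]. rewrite vnorm_scal, Rabs_right by lra. lra. }
  specialize (Hmin y' Hy'x). specialize (Hstep y0 h t ltac:(lra)). fold y' in Hstep.
  assert (E0 : vadd y0 (vscal 0 h) = y0) by vext. rewrite E0.
  unfold penalized in Hmin. rewrite Hsd in Hmin.
  pose proof (smoothed_dist_le m K eta (g y') z0 Kz0).
  assert (c * smoothed_dist K eta (g y') <= c * sqrt (inner (vsub (g y') z0) (vsub (g y') z0) + eta * eta))
    by (apply Rmult_le_compat_l; auto).
  fold y'. lra.
Qed.

Lemma penalized_min_near r y0 : 0 <= eta -> K (g x) -> phi x = 0 ->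
  (forall y, vnorm (vsub y x) <= r -> - (c * rdist (g y) K) <= phi y) ->
  vnorm (vsub y0 x) <= r ->
  (forall y, vnorm (vsub y x) <= r -> penalized phi c eta x y0 <= penalized phi c eta x y) ->
  vnorm (vsub y0 x) * vnorm (vsub y0 x) <= c * eta.
Proof.
  intros Heta Kx Hphix Hpen Hy0 Hmin.
  assert (Hx : penalized phi c eta x x = c * eta).
  { unfold penalized. rewrite (smoothed_dist_in m K eta (g x) Heta Kx), Hphix.
    replace (vsub x x) with (fun _ : Fin.t n => 0) by vext. rewrite inner_zero_r. ring. }
  pose proof (Hmin x ltac:(rewrite vnorm_sub_self; pose proof (vnorm_nonneg n (vsub y0 x)); lra)).
  pose proof (Hpen y0 Hy0).
  pose proof (smoothed_dist_ge m K eta (g y0) (g x) Kx).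
  assert (c * rdist (g y0) K <= c * smoothed_dist K eta (g y0)) by (apply Rmult_le_compat_l; auto).
  unfold penalized in *. rewrite vnorm_sq. lra.
Qed.

End Penalization.

Lemma reg_normal_fuzzy_representation n m (W : vec n -> Prop) (g : vec n -> vec m) Dg
    (K : vec m -> Prop) kappa x v rho_s eps :
  C1_on W g Dg -> is_closed K -> 0 <= kappa -> 0 < rho_s -> 0 < eps -> W x -> K (g x) ->
  (forall y, vnorm (vsub y x) < rho_s -> W y /\
     Rbar_le (dist y (fun y => W y /\ K (g y))) (Rbar_scal kappa (dist (g y) K))) ->
  reg_normal (fun y => W y /\ K (g y)) x v ->
  exists y z mu, W y /\ vnorm (vsub y x) < eps /\ K z /\ vnorm (vsub z (g x)) < eps /\
    reg_normal K z mu /\ vnorm mu <= (vnorm v + eps) * kappa /\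
    vnorm (vsub (mtapply (Dg y) mu) v) <= eps.
Proof.
  intros HC HK Hk Hrs He Wx Kx Hsub [_ Hv].
  (* minimize defect + smoothed exact penalty + [|y - x|^2] over a small ball: the minimizer [y0]
     stays close to [x], and its first-order condition is the required representation *)
  set (S := fun y => W y /\ K (g y)). assert (Sx : S x) by (split; auto).
  set (e1 := eps / 2). set (phi := normal_defect v x e1).
  set (L := vnorm v + e1). assert (HL : 0 < L) by (unfold L, e1; pose proof (vnorm_nonneg n v); lra).
  set (LK := L * kappa). assert (HLK : 0 <= LK) by (unfold LK; nra).
  assert (Hlip : forall y s, phi s - L * vnorm (vsub y s) <= phi y)
    by (intros; apply normal_defect_lipschitz; unfold e1; lra).
  destruct (reg_normal_penalty n m W g K kappa x v rho_s e1 Hk Hrs Kx Hsub (conj Sx Hv) ltac:(unfold e1; lra))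
    as [r [Hr [Hrrs Hpen]]]. fold phi L LK in Hpen.
  destruct (C1_on_continuous n m W g Dg x HC Wx (eps / 2) ltac:(lra)) as [dg [Hdg Hgc]].
  destruct (exists_pos_le (r / 2) (dg / 2) ltac:(lra) ltac:(lra)) as [r0 [Hr0 [Hr0a Hr0b]]].
  destruct (exists_pos_le r0 (eps / 2) Hr0 ltac:(lra)) as [r1 [Hr1 [Hr1a Hr1c]]].
  set (M := r1 * r1). assert (HM : 0 < M) by (unfold M; nra).
  destruct (exists_pos_mul_le LK (M / 64) HLK ltac:(lra)) as [eta [Heta HLKeta]].
  assert (HWr1 : forall y, vnorm (vsub y x) <= r1 -> W y) by (intros y Hy; apply (Hsub y); lra).
  destruct (penalized_min_exists n m W g Dg K HC phi L LK eta x (g x) Kx HLK ltac:(lra) Hlip r1 Hr1 HWr1)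
    as [y0 [Hy0r Hmin]].
  assert (Hy0sq : vnorm (vsub y0 x) * vnorm (vsub y0 x) <= M / 64).
  { pose proof (penalized_min_near n m g K phi LK eta x HLK r1 y0 ltac:(lra) Kx
      ltac:(unfold phi; apply normal_defect_self) ltac:(intros y Hy; apply Hpen; lra) Hy0r Hmin).
    lra. }
  pose proof (vnorm_nonneg n (vsub y0 x)) as Hy0n.
  assert (Hy0a : vnorm (vsub y0 x) <= r1 / 8) by (unfold M in Hy0sq; nra).
  destruct (nearest_point_exists m K (g y0) (g x) HK Kx) as [z0 [Kz0 Hz0]].
  set (sd := smoothed_dist K eta (g y0)).
  assert (Hd0 : vnorm (vsub (g y0) z0) <= sd).
  { rewrite <- (rdist_nearest_point m K (g y0) z0 Kz0 Hz0). apply (smoothed_dist_ge m K eta (g y0) (g x) Kx). }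
  assert (Hsd : 0 < sd) by (apply sqrt_lt_R0; pose proof (rdist_nonneg m (g y0) K (g x) Kx); nra).
  set (mu := vscal (LK / sd) (vsub (g y0) z0)).
  assert (Hstat := penalized_min_stationary n m W g Dg K HC phi LK eta x HLK v e1 r1 y0 z0 Heta
    ltac:(unfold e1; lra) ltac:(intros; apply normal_defect_step; unfold e1; lra)
    (HWr1 y0 Hy0r) ltac:(lra) Kz0 Hz0 Hmin).
  fold sd mu in Hstat.
  assert (Hgy0 : vnorm (vsub (g y0) (g x)) < eps / 2) by (apply Hgc; lra).
  exists y0, z0, mu. split; [apply HWr1; auto|]. split; [lra|]. split; [auto|]. split.
  { pose proof (Hz0 (g x) Kx). pose proof (vnorm_sub_triangle m z0 (g y0) (g x)).
    rewrite (vnorm_sub_comm m z0 (g y0)) in H0. lra. }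
  destruct (nearest_point_scaled_normal m K (g y0) z0 LK sd Kz0 HLK Hsd Hz0 Hd0) as [Hmu Hmun].
  fold mu in Hmu, Hmun. split; [exact Hmu|]. split.
  { assert (LK <= (vnorm v + eps) * kappa) by (unfold LK, L, e1; apply Rmult_le_compat_r; lra). lra. }
  pose proof (vnorm_sub_shift n (mtapply (Dg y0) mu) v (vsub y0 x)). unfold e1 in Hstat. lra.
Qed.

Lemma reg_normal_fuzzy_representation_near n m (W : vec n -> Prop) (g : vec n -> vec m) Dg
    (K : vec m -> Prop) (S : vec n -> Prop) x kappa rho y0 w e :
  C1_on W g Dg -> is_closed K -> 0 <= kappa -> 0 < e ->
  (forall y, vnorm (vsub y x) < rho -> W y /\ (S y <-> K (g y)) /\
     Rbar_le (dist y (fun y => W y /\ K (g y))) (Rbar_scal kappa (dist (g y) K))) ->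
  vnorm (vsub y0 x) < rho / 2 -> reg_normal S y0 w ->
  exists y z mu, W y /\ vnorm (vsub y y0) < e /\ K z /\ vnorm (vsub z (g y0)) < e /\
    reg_normal K z mu /\ vnorm mu <= (vnorm w + e) * kappa /\ vnorm (vsub (mtapply (Dg y) mu) w) <= e.
Proof.
  intros HC HK Hkap He Hloc Hy0 Hreg.
  assert (Hnear : forall y, vnorm (vsub y y0) < rho / 2 -> vnorm (vsub y x) < rho)
    by (intros y Hy; pose proof (vnorm_sub_triangle n y y0 x); lra).
  pose proof (vnorm_nonneg n (vsub y0 x)).
  destruct (Hloc y0 ltac:(lra)) as [Wy0 [Heq0 _]].
  apply (reg_normal_fuzzy_representation n m W g Dg K kappa y0 w (rho / 2)); auto; try lra.
  - apply Heq0, Hreg.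
  - intros y Hy. destruct (Hloc y (Hnear y Hy)) as [Wy [_ Hb]]. auto.
  - apply (reg_normal_local n S _ y0 w (rho / 2)); [lra| |exact Hreg].
    intros y Hy. destruct (Hloc y (Hnear y Hy)) as [Wy [Hey _]]. split.
    + intros Sy. split; auto. apply Hey; auto.
    + intros [_ Kgy]. apply Hey; auto.
Qed.

Lemma lim_normal_representation n m (W : vec n -> Prop) (g : vec n -> vec m) Dg
    (K : vec m -> Prop) (S : vec n -> Prop) x v kappa rho :
  C1_on W g Dg -> is_closed K -> 0 <= kappa -> 0 < rho ->
  (forall y, vnorm (vsub y x) < rho -> W y /\ (S y <-> K (g y)) /\
     Rbar_le (dist y (fun y => W y /\ K (g y))) (Rbar_scal kappa (dist (g y) K))) ->
  W x -> K (g x) -> lim_normal S x v ->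
  exists lam, lim_normal K (g x) lam /\ mtapply (Dg x) lam = v /\ vnorm lam <= kappa * vnorm v.
Proof.
  intros HC HK Hkap Hr Hloc Wx Kx [_ [xk [vk [Hxk [Hxc [Hvc Hreg]]]]]].
  destruct (eventually_and _ _ (eventually_conv n xk x (rho / 2) Hxc ltac:(lra))
                               (eventually_conv n vk v 1 Hvc ltac:(lra))) as [N HN].
  set (xs := fun k => xk (N + k)%nat). set (vs := fun k => vk (N + k)%nat).
  assert (Hshift : incr (fun k => (N + k)%nat)) by (intro; lia).
  assert (Hxs : forall k, vnorm (vsub (xs k) x) < rho / 2 /\ vnorm (vsub (vs k) v) < 1)
    by (intros k; apply HN; lia).
  assert (Hstep : forall k, exists y z mu,
    W y /\ vnorm (vsub y (xs k)) < 1 / (INR k + 1) /\ K z /\ vnorm (vsub z (g (xs k))) < 1 / (INR k + 1) /\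
    reg_normal K z mu /\ vnorm mu <= (vnorm (vs k) + 1 / (INR k + 1)) * kappa /\
    vnorm (vsub (mtapply (Dg y) mu) (vs k)) <= 1 / (INR k + 1)).
  { intros k. apply (reg_normal_fuzzy_representation_near n m W g Dg K S x kappa rho); auto.
    - apply inv_succ_pos.
    - apply Hxs.
    - apply Hreg. }
  destruct (seq_choice3 _ Hstep) as [ys [zs [mus Hall]]].
  assert (Hmub : forall k, vnorm (mus k) <= (vnorm v + 2) * kappa).
  { intros k. destruct (Hall k) as [_ [_ [_ [_ [_ [Hm _]]]]]]. destruct (Hxs k) as [_ Hv1].
    pose proof (vnorm_le_sub n (vs k) v). pose proof (inv_succ_le1 k).
    eapply Rle_trans; [apply Hm|]. apply Rmult_le_compat_r; auto. lra. }
  destruct (bolzano_weierstrass_vec m mus ((vnorm v + 2) * kappa) Hmub) as [phi [lam [Hphi Hmuc]]].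
  assert (Hinv : forall e, 0 < e -> eventually (fun k => 1 / (INR (phi k) + 1) < e))
    by (intros e He; apply (eventually_sub (fun k => 1 / (INR k + 1) < e) phi Hphi (eventually_inv_succ_lt e He))).
  assert (Hxsc : seq_conv (fun k => xs (phi k)) x)
    by (apply (seq_conv_sub n xs); auto; apply (seq_conv_sub n xk x _ Hshift Hxc)).
  assert (Hvsc : seq_conv (fun k => vs (phi k)) v)
    by (apply (seq_conv_sub n vs); auto; apply (seq_conv_sub n vk v _ Hshift Hvc)).
  assert (Hclose : forall a : nat -> R, (forall k, a k <= 1 / (INR k + 1)) ->
            forall e, 0 < e -> eventually (fun k => a (phi k) < e)).
  { intros a Ha e He. apply (eventually_impl _ _ (fun k Hk => Rle_lt_trans _ _ _ (Ha (phi k)) Hk)).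
    apply Hinv; auto. }
  assert (Hysc : seq_conv (fun k => ys (phi k)) x).
  { apply (seq_conv_of_close n _ _ x Hxsc). apply (Hclose (fun k => vnorm (vsub (ys k) (xs k)))).
    intros k; left; apply Hall. }
  exists lam. split; [|split].
  - split; auto. exists (fun k => zs (phi k)), (fun k => mus (phi k)).
    split; [intros k; apply Hall|]. split; [|split; [auto|intros k; apply Hall]].
    apply (seq_conv_of_close m (fun k => g (xs (phi k)))); [apply (seq_conv_C1_on n m W g Dg); auto|].
    apply (Hclose (fun k => vnorm (vsub (zs k) (g (xs k))))). intros k; left; apply Hall.
  - apply (seq_conv_unique n (fun k => mtapply (Dg (ys (phi k))) (mus (phi k)))).
    + apply mtapply_seq_conv; auto. apply (seq_conv_jacobian n m W g Dg); auto. intros k; apply Hall.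
    + apply (seq_conv_of_close n _ _ v Hvsc).
      apply (Hclose (fun k => vnorm (vsub (mtapply (Dg (ys k)) (mus k)) (vs k)))). intros k; apply Hall.
  - apply (seq_conv_vnorm_le_scal n m _ _ _ _ (fun k => 1 / (INR (phi k) + 1)) kappa Hkap Hmuc Hvsc Hinv).
    intros k. apply Hall.
Qed.

(** * Subamenable sets *)

Lemma subamenable_local_normal_ineq l (C : vec l -> Prop) zb kappa1 theta :
  subamenable C zb -> 0 <= kappa1 -> 0 < theta ->
  exists r, 0 < r /\ forall z c lam, C z -> vnorm (vsub z zb) < r / 2 -> C c -> vnorm (vsub c zb) < r ->
    lim_normal C z lam -> vnorm lam <= kappa1 -> inner lam (vsub c z) <= theta * vnorm (vsub c z).
Proof.
  intros [Czb [W [d [q [Dq [Q [HW [Wzb [HC1 [HQc [HQv [Heq [kq [Hkq [dq [Hdq Hbnd]]]]]]]]]]]]]]]] Hk1 Hth.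
  destruct (HW zb Wzb) as [rW [HrW HballW]].
  destruct (exists_pos_le rW dq HrW Hdq) as [rho0 [Hr0 [Hr0a Hr0b]]].
  destruct (exists_pos_mul_le (kq * kappa1) theta ltac:(nra) Hth) as [th [Hth' Hkth]].
  destruct (C1_on_uniform_differentiable l d W q Dq zb rho0 HC1 Wzb Hr0 ltac:(intros y Hy; apply HballW; lra) th Hth')
    as [r [Hr [Hrb Hud]]].
  exists r. split; auto. intros z c lam Cz Hz Cc Hc Hlam Hlk.
  assert (Wz : W z) by (apply HballW; lra). assert (Wc : W c) by (apply HballW; lra).
  (* pull [lam] back to a normal [mu] of the convex set [Q], where the normal inequality is exact *)
  destruct (lim_normal_representation l d W q Dq Q C z lam kq (r / 2) HC1 HQc Hkq ltac:(lra))
    as [mu [Hmu [Hmut Hmun]]]; [|auto|apply Heq; auto|auto|].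
  { intros y Hy. assert (vnorm (vsub y zb) < r) by (pose proof (vnorm_sub_triangle l y z zb); lra).
    split; [apply HballW; lra|]. split; [apply Heq, HballW; lra|]. apply Hbnd. lra. }
  pose proof (convex_lim_normal_ineq d Q (q z) mu HQv Hmu (q c) (proj1 (Heq c Wc) Cc)) as Hconv.
  set (rem := vsub (vsub (q c) (q z)) (mapply (Dq z) (vsub c z))).
  rewrite <- Hmut, inner_mtapply.
  replace (mapply (Dq z) (vsub c z)) with (vsub (vsub (q c) (q z)) rem) by (unfold rem; vext).
  rewrite inner_sub_r.
  pose proof (cauchy_schwarz d mu rem). pose proof (Rle_abs (- inner mu rem)). rewrite Rabs_Ropp in *.
  specialize (Hud z c ltac:(lra) Hc). fold rem in Hud.
  pose proof (vnorm_nonneg d mu). pose proof (vnorm_nonneg l (vsub c z)).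
  assert (vnorm mu <= kq * kappa1) by (apply Rle_trans with (kq * vnorm lam); [auto|apply Rmult_le_compat_l; auto]).
  assert (vnorm mu * vnorm rem <= kq * kappa1 * (th * vnorm (vsub c z)))
    by (apply Rmult_le_compat; auto; apply vnorm_nonneg).
  assert (kq * kappa1 * (th * vnorm (vsub c z)) <= theta * vnorm (vsub c z))
    by (rewrite <- Rmult_assoc; apply Rmult_le_compat_r; auto).
  lra.
Qed.

Lemma subamenable_normal_ineq l (C : vec l -> Prop) zb kappa1 theta :
  subamenable C zb -> 0 <= kappa1 -> 0 < theta ->
  exists rho, 0 < rho /\ forall z u lam, C z -> vnorm (vsub z zb) < rho ->
    vnorm (vsub u z) < rho -> lim_normal C z lam -> vnorm lam <= kappa1 ->
    inner lam (vsub u z) <= kappa1 * rdist u C + 2 * theta * vnorm (vsub u z).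
Proof.
  intros Hsa Hk1 Hth.
  destruct (subamenable_local_normal_ineq l C zb kappa1 theta Hsa Hk1 Hth) as [r [Hr HU]].
  exists (r / 4). split; [lra|]. intros z u lam Cz Hz Hu Hlam Hlk.
  destruct (rdist_spec l u C z Cz) as [_ [Hr0 [Hrle Happ]]].
  pose proof (Hrle z Cz) as Hrz. pose proof (vnorm_nonneg l lam).
  (* compare with an almost nearest point [c] of [C] to [u] *)
  apply (le_of_le_plus_lin _ _ (kappa1 + theta) (r / 4)); [lra|lra|]. intros tau Htau.
  destruct (Happ tau ltac:(lra)) as [c [Cc Hc]].
  assert (Hcz : vnorm (vsub c z) <= 2 * vnorm (vsub u z) + tau).
  { pose proof (vnorm_sub_triangle l c u z). rewrite (vnorm_sub_comm l c u) in H0. lra. }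
  assert (Hczb : vnorm (vsub c zb) < r) by (pose proof (vnorm_sub_triangle l c z zb); lra).
  pose proof (HU z c lam Cz ltac:(lra) Cc Hczb Hlam Hlk).
  assert (E : inner lam (vsub u z) = inner lam (vsub u c) + inner lam (vsub c z))
    by (rewrite <- inner_add_r; f_equal; vext).
  rewrite E. pose proof (inner_le_vnorm l lam (vsub u c)).
  assert (vnorm lam * vnorm (vsub u c) <= kappa1 * (rdist u C + tau))
    by (apply Rmult_le_compat; auto; try lra; apply vnorm_nonneg).
  assert (theta * vnorm (vsub c z) <= theta * (2 * vnorm (vsub u z) + tau)) by (apply Rmult_le_compat_l; lra).
  nra.
Qed.

(** * The subregularity modulus *)

Lemma linearized_normal_estimate n l (A : mat l n) (h : vec n) (r lam : vec l) k1 th1 th M dC :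
  0 < vnorm h -> mtapply A lam = vscal (/ vnorm h) h -> vnorm lam <= k1 -> 0 <= th ->
  vnorm r <= th1 * vnorm h -> vnorm (mapply A h) <= M * vnorm h ->
  inner lam (vadd (mapply A h) r) <= k1 * dC + 2 * th * vnorm (vadd (mapply A h) r) ->
  vnorm h * (1 - k1 * th1 - 2 * th * (M + th1)) <= k1 * dC.
Proof.
  intros Ht Hlam Hk Hth Hr HA HE. set (t := vnorm h) in *.
  assert (Hlh : inner lam (mapply A h) = t).
  { rewrite <- inner_mtapply, Hlam, inner_scal_l, <- vnorm_sq. fold t. field. lra. }
  assert (Hlr : - (k1 * (th1 * t)) <= inner lam r).
  { pose proof (cauchy_schwarz l lam r). pose proof (Rle_abs (- inner lam r)). rewrite Rabs_Ropp in H0.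
    pose proof (vnorm_nonneg l lam). pose proof (vnorm_nonneg l r).
    assert (vnorm lam * vnorm r <= k1 * (th1 * t)) by (apply Rmult_le_compat; auto). lra. }
  assert (Hn : vnorm (vadd (mapply A h) r) <= (M + th1) * t)
    by (pose proof (vnorm_triangle l (mapply A h) r); lra).
  rewrite inner_add_r, Hlh in HE.
  assert (2 * th * vnorm (vadd (mapply A h) r) <= 2 * th * ((M + th1) * t)) by (apply Rmult_le_compat_l; lra).
  lra.
Qed.

Lemma subreg_bound_of_normal_bound n l (f : vec n -> vec l) Df (C : vec l -> Prop) xb kappa1 kappa2 eps0 :
  is_C1 f Df -> is_closed C -> C (f xb) -> subamenable C (f xb) -> 0 < kappa1 -> kappa1 < kappa2 -> 0 < eps0 ->
  (forall x, C (f x) -> vnorm (vsub x xb) < eps0 -> forall w, lim_normal (preimage f C) x w -> vnorm w <= 1 ->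
     exists lam, lim_normal C (f x) lam /\ mtapply (Df x) lam = w /\ vnorm lam <= kappa1) ->
  subreg_bound f (fun _ => True) C xb kappa2.
Proof.
  intros HC HCl Cxb Hsa Hk1 Hk12 He0 Hh.
  set (Dl := 1 - kappa1 / kappa2).
  assert (Hq : kappa1 / kappa2 < 1)
    by (apply (Rmult_lt_reg_r kappa2); [lra|]; unfold Rdiv; rewrite Rmult_assoc, Rinv_l by lra; lra).
  assert (HDl : 0 < Dl < 1) by (unfold Dl; pose proof (Rdiv_lt_0_compat kappa1 kappa2 Hk1 ltac:(lra)); lra).
  destruct (C1_on_jacobian_bounded n l (fun _ => True) f Df xb HC I) as [rM [M [HrM [HM0 HMb]]]].
  destruct (exists_pos_mul_le (kappa1 + 1) (Dl / 4) ltac:(lra) ltac:(lra)) as [th1 [Hth1 Hc1]].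
  destruct (C1_on_uniform_differentiable n l (fun _ => True) f Df xb 1 HC I ltac:(lra) (fun _ _ => I) th1 Hth1) as [r1 [Hr1 [_ Hud]]].
  destruct (exists_pos_mul_le (2 * (M + 1)) (Dl / 4) ltac:(lra) ltac:(lra)) as [th [Hth Hc2]].
  destruct (subamenable_normal_ineq l C (f xb) kappa1 th Hsa ltac:(lra) Hth) as [rE [HrE HE]].
  destruct (C1_on_continuous n l (fun _ => True) f Df xb HC I rE HrE) as [df [Hdf Hfc]].
  destruct (exists_pos_le (eps0 / 2) (rM / 2) ltac:(lra) ltac:(lra)) as [d1 [Hd1 [Hd1a Hd1b]]].
  destruct (exists_pos_le (r1 / 2) (df / 2) ltac:(lra) ltac:(lra)) as [d2 [Hd2 [Hd2a Hd2b]]].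
  destruct (exists_pos_le d1 d2 Hd1 Hd2) as [d3 [Hd3 [Hd3a Hd3b]]].
  destruct (exists_pos_le d3 (rE / (2 * (M + 2))) Hd3 ltac:(apply Rdiv_lt_0_compat; lra))
    as [delta [Hdel [Hdela Hdelb]]].
  exists delta. split; auto. intros x Hx.
  assert (Sxb : preimage f C xb) by exact Cxb.
  apply (Rbar_le_dist_rdist n l _ C x (f x) kappa2 xb (f xb) (conj I Cxb) Cxb).
  replace (fun y : vec n => True /\ C (f y)) with (preimage f C)
    by (apply functional_extensionality; intro y; apply propositional_extensionality; unfold preimage; tauto).
  destruct (nearest_point_exists n (preimage f C) x xb (preimage_closed n l f Df C HC HCl) Sxb) as [p [Sp Hp]].
  rewrite (rdist_nearest_point n (preimage f C) x p Sp Hp).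
  set (t := vnorm (vsub x p)). set (dC := rdist (f x) C).
  pose proof (rdist_nonneg l (f x) C (f xb) Cxb) as HdC0. fold dC in HdC0.
  assert (Htx : t <= vnorm (vsub x xb)) by (apply Hp; auto).
  assert (Hpx : vnorm (vsub p xb) < 2 * delta).
  { pose proof (vnorm_sub_triangle n p x xb). rewrite (vnorm_sub_comm n p x) in H. fold t in H. lra. }
  destruct (Rle_lt_or_eq_dec 0 t (vnorm_nonneg n _)) as [Htp|Ht];
    [|rewrite <- Ht; pose proof (Rmult_le_pos kappa2 dC ltac:(lra) HdC0); lra].
  (* the unit proximal normal at the nearest point [p] is represented through [C] *)
  destruct (Hh p Sp ltac:(lra) (vscal (/ t) (vsub x p))) as [lam [Hlam [Hlt Hln]]].
  { apply reg_normal_lim_normal, nearest_point_reg_normal; auto. left; apply Rinv_0_lt_compat; lra. }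
  { rewrite vnorm_scal, Rabs_right by (left; apply Rinv_0_lt_compat; lra). fold t. right; field; lra. }
  assert (Edf : vsub (f x) (f p) = vadd (mapply (Df p) (vsub x p)) (vsub (vsub (f x) (f p)) (mapply (Df p) (vsub x p))))
    by vext.
  assert (HA : vnorm (mapply (Df p) (vsub x p)) <= M * t).
  { eapply Rle_trans; [apply mapply_bound|]. apply Rmult_le_compat_r; [apply vnorm_nonneg|]. apply HMb; lra. }
  assert (Hr : vnorm (vsub (vsub (f x) (f p)) (mapply (Df p) (vsub x p))) <= th1 * t) by (apply Hud; lra).
  assert (Hth1b : th1 <= 1) by nra.
  assert (Hfxp : vnorm (vsub (f x) (f p)) < rE).
  { rewrite Edf. eapply Rle_lt_trans; [apply vnorm_triangle|].
    apply Rle_lt_trans with ((M + 2) * delta); [nra|].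
    apply Rle_lt_trans with ((M + 2) * (rE / (2 * (M + 2)))); [apply Rmult_le_compat_l; lra|].
    replace ((M + 2) * (rE / (2 * (M + 2)))) with (rE / 2) by (field; lra). lra. }
  pose proof (linearized_normal_estimate n l (Df p) (vsub x p) _ lam kappa1 th1 th M dC Htp Hlt Hln
                ltac:(lra) Hr HA) as Hest.
  rewrite <- Edf in Hest. specialize (Hest (HE (f p) (f x) lam Sp ltac:(apply Hfc; lra) Hfxp Hlam Hln)).
  apply (le_of_mul_coeff_le t dC kappa1 kappa2 (1 - kappa1 * th1 - 2 * th * (M + th1))); [lra|lra| |exact Hest].
  unfold Dl in *. nra.
Qed.

Lemma normal_bound_of_subreg_bound n l (f : vec n -> vec l) Df (C : vec l -> Prop) xb kappa :
  is_C1 f Df -> is_closed C -> 0 <= kappa -> subreg_bound f (fun _ => True) C xb kappa ->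
  exists eps, 0 < eps /\ forall x, C (f x) -> vnorm (vsub x xb) < eps -> forall v, lim_normal (preimage f C) x v ->
    exists lam, lim_normal C (f x) lam /\ mtapply (Df x) lam = v /\ vnorm lam <= kappa * vnorm v.
Proof.
  intros HC HCl Hk [d [Hd Hb]]. exists (d / 2). split; [lra|]. intros x Cx Hx v Hv.
  apply (lim_normal_representation n l (fun _ => True) f Df C (preimage f C) x v kappa (d / 2)); auto; try lra.
  intros y Hy. split; [auto|]. split; [unfold preimage; tauto|]. apply Hb.
  pose proof (vnorm_sub_triangle n y x xb). lra.
Qed.

Lemma h1_nonneg n l (f : vec n -> vec l) Df (C : vec l -> Prop) x : C (f x) -> Rbar_le (Finite 0) (h1 f Df C x).
Proof.
  intros Cx. unfold h1.
  eapply Rbar_le_trans; [|apply Rbar_sup_ge; exists (fun _ => 0); split; [|split; [|reflexivity]]].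
  - apply Rbar_inf_ge. intros t [lam [_ [_ ->]]]. simpl. apply vnorm_nonneg.
  - apply lim_normal_zero. exact Cx.
  - rewrite vnorm_zero; lra.
Qed.

Lemma h1_le_h2 n l (f : vec n -> vec l) Df (C : vec l -> Prop) x : Rbar_le (h1 f Df C x) (h2 f Df C x).
Proof.
  unfold h2. apply Rbar_inf_ge. intros t [tau [-> [Htau HP]]]. unfold h1. apply Rbar_sup_le. intros s [v [Hv [Hvn ->]]].
  destruct (HP v Hv Hvn) as [lam [Hlam [Hln Hv']]].
  eapply Rbar_le_trans.
  { apply Rbar_inf_le. exists (vscal tau lam).
    split; [apply lim_normal_scal; auto|split; [rewrite mtapply_scal; auto|reflexivity]]. }
  simpl. rewrite vnorm_scal, Rabs_right by lra. pose proof (vnorm_nonneg l lam). nra.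
Qed.

Lemma h2_le_h1 n l (f : vec n -> vec l) Df (C : vec l -> Prop) x : C (f x) -> Rbar_le (h2 f Df C x) (h1 f Df C x).
Proof.
  intros Cx. pose proof (h1_nonneg n l f Df C x Cx) as H0.
  destruct (h1 f Df C x) as [a| |] eqn:E; [| destruct (h2 f Df C x); simpl; auto | simpl in H0; tauto].
  simpl in H0. apply Rbar_le_of_le_plus_eps. intros e He. set (tau := a + e).
  (* every unit normal has a representative of norm below [tau]; rescale it into the unit ball *)
  unfold h2. apply Rbar_inf_le. exists tau. split; auto. split; [unfold tau; lra|]. intros v Hv Hvn.
  set (F := fun t => exists lam, lim_normal C (f x) lam /\ mtapply (Df x) lam = v /\ t = Finite (vnorm lam)).
  assert (Hs : Rbar_le (Rbar_inf F) (Finite a)) by (rewrite <- E; unfold h1; apply Rbar_sup_ge; exists v; auto).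
  destruct (Rbar_inf_lt F tau) as [t [[lam [Hlam [Hlt ->]]] Hnt]].
  { intros Hc. pose proof (Rbar_le_trans _ _ _ Hc Hs). simpl in H. unfold tau in H. lra. }
  simpl in Hnt. assert (Hti : 0 < / tau) by (apply Rinv_0_lt_compat; unfold tau; lra).
  exists (vscal (/ tau) lam). split; [apply lim_normal_scal; auto; lra|]. split.
  - rewrite vnorm_scal, Rabs_right by lra.
    apply (Rmult_le_reg_l tau); [unfold tau; lra|]. rewrite <- Rmult_assoc, Rinv_r by (unfold tau; lra). lra.
  - rewrite mtapply_scal, Hlt. unfold vscal. apply functional_extensionality; intro i. field. unfold tau; lra.
Qed.

Lemma h2_eq_h3 n l (f : vec n -> vec l) Df (C : vec l -> Prop) x : h2 f Df C x = h3 f Df C x.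
Proof.
  unfold h2, h3. f_equal. apply functional_extensionality; intro t. apply propositional_extensionality.
  split; intros [tau [Ht [Htau H]]]; exists tau; split; auto; split; auto;
    intros v Hv Hvn; destruct (H v Hv Hvn) as [lam H'].
  - destruct H' as [H1 [H2 H3]]. exists lam, (mtapply (Df x) lam). unfold coderivF. auto.
  - destruct H' as [w [H1 [[H2 H3] H4]]]. exists lam. subst. auto.
Qed.

Lemma limsup_ext n (S : vec n -> Prop) xb (h h' : vec n -> Rbar) : (forall x, S x -> h x = h' x) ->
  limsup_at S xb h = limsup_at S xb h'.
Proof.
  intros H. unfold limsup_at. f_equal. apply functional_extensionality; intro t. apply propositional_extensionality.
  assert (E : forall eps, (fun s => exists x, S x /\ vnorm (vsub x xb) < eps /\ s = h x) =
                          (fun s => exists x, S x /\ vnorm (vsub x xb) < eps /\ s = h' x)).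
  { intros eps. apply functional_extensionality; intro s. apply propositional_extensionality.
    split; intros [x [Sx [Hx Hs]]]; exists x; split; auto; split; auto; rewrite Hs; [|symmetry]; apply H; auto. }
  split; intros [eps [He Ht]]; exists eps; split; auto; rewrite Ht, E; auto.
Qed.

Lemma limsup_h1_le_subreg_modulus n l (f : vec n -> vec l) Df (C : vec l -> Prop) xb :
  is_C1 f Df -> is_closed C ->
  Rbar_le (limsup_at (preimage f C) xb (h1 f Df C)) (subreg_modulus f C xb).
Proof.
  intros HC HCl. unfold subreg_modulus. apply Rbar_inf_ge. intros t [kappa [-> [Hk Hsb]]].
  destruct (normal_bound_of_subreg_bound n l f Df C xb kappa HC HCl Hk Hsb) as [eps [He HA]].
  unfold limsup_at. eapply Rbar_le_trans; [apply Rbar_inf_le; exists eps; split; [exact He|reflexivity]|].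
  apply Rbar_sup_le. intros s [x [Sx [Hx ->]]]. unfold h1. apply Rbar_sup_le. intros s' [v [Hv [Hvn ->]]].
  destruct (HA x Sx Hx v Hv) as [lam [Hlam [Hlt Hln]]].
  eapply Rbar_le_trans; [apply Rbar_inf_le; exists lam; split; [exact Hlam|split; [exact Hlt|reflexivity]]|].
  simpl. nra.
Qed.

Lemma normal_bound_of_limsup_h1_lt n l (f : vec n -> vec l) Df (C : vec l -> Prop) xb kappa1 :
  ~ Rbar_le (Finite kappa1) (limsup_at (preimage f C) xb (h1 f Df C)) ->
  exists eps, 0 < eps /\ forall x, C (f x) -> vnorm (vsub x xb) < eps ->
    forall w, lim_normal (preimage f C) x w -> vnorm w <= 1 ->
    exists lam, lim_normal C (f x) lam /\ mtapply (Df x) lam = w /\ vnorm lam <= kappa1.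
Proof.
  intros Hlt. unfold limsup_at in Hlt.
  destruct (Rbar_inf_lt _ kappa1 Hlt) as [t [[eps [Heps ->]] Hnt]].
  exists eps. split; auto. intros x Cx Hx w Hw Hwn.
  set (F := fun t => exists lam, lim_normal C (f x) lam /\ mtapply (Df x) lam = w /\ t = Finite (vnorm lam)).
  assert (Hle : Rbar_le (Rbar_inf F)
                  (Rbar_sup (fun s => exists x, preimage f C x /\ vnorm (vsub x xb) < eps /\ s = h1 f Df C x))).
  { eapply Rbar_le_trans; [|apply Rbar_sup_ge; exists x; split; [exact Cx|split; [exact Hx|reflexivity]]].
    unfold h1. apply Rbar_sup_ge. exists w. auto. }
  destruct (Rbar_inf_lt F kappa1) as [t' [[lam [Hlam [Hlt' ->]]] Hnt']].
  { intros Hc. apply Hnt. eapply Rbar_le_trans; [apply Hc|apply Hle]. }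
  exists lam. split; auto. split; auto. simpl in Hnt'. lra.
Qed.

Lemma subreg_modulus_le_limsup_h1 n l (f : vec n -> vec l) Df (C : vec l -> Prop) xb :
  is_C1 f Df -> is_closed C -> C (f xb) -> subamenable C (f xb) ->
  Rbar_le (subreg_modulus f C xb) (limsup_at (preimage f C) xb (h1 f Df C)).
Proof.
  intros HC HCl Cxb Hsa.
  assert (H0 : Rbar_le (Finite 0) (limsup_at (preimage f C) xb (h1 f Df C))).
  { unfold limsup_at. apply Rbar_inf_ge. intros t [eps [He ->]].
    eapply Rbar_le_trans; [apply (h1_nonneg n l f Df C xb Cxb)|].
    apply Rbar_sup_ge. exists xb. split; [exact Cxb|]. split; [rewrite vnorm_sub_self; lra|reflexivity]. }
  destruct (limsup_at (preimage f C) xb (h1 f Df C)) as [m| |] eqn:Em;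
    [| destruct (subreg_modulus f C xb); simpl; auto | simpl in H0; tauto].
  simpl in H0. apply Rbar_le_of_le_plus_eps. intros e He.
  destruct (normal_bound_of_limsup_h1_lt n l f Df C xb (m + e / 2)) as [eps [Heps Hbound]].
  { rewrite Em. simpl. lra. }
  unfold subreg_modulus. apply Rbar_inf_le. exists (m + e). split; auto. split; [lra|].
  apply (subreg_bound_of_normal_bound n l f Df C xb (m + e / 2) (m + e) eps); auto; lra.
Qed.

Theorem corollary3p4 (n l : nat) (f : vec n -> vec l) (Df : vec n -> mat l n)
  (C : vec l -> Prop) (xb : vec n) :
  is_C1 f Df ->
  is_closed C ->
  C (f xb) ->
  subamenable C (f xb) ->
  metric_subregular f (fun _ => True) C xb ->
  subreg_modulus f C xb = limsup_at (preimage f C) xb (h1 f Df C) /\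
  subreg_modulus f C xb = limsup_at (preimage f C) xb (h2 f Df C) /\
  subreg_modulus f C xb = limsup_at (preimage f C) xb (h3 f Df C).
Proof.
  intros HC HCl Cxb Hsa _.
  assert (E1 : subreg_modulus f C xb = limsup_at (preimage f C) xb (h1 f Df C))
    by (apply Rbar_le_antisym; [apply subreg_modulus_le_limsup_h1|apply limsup_h1_le_subreg_modulus]; auto).
  assert (E12 : limsup_at (preimage f C) xb (h1 f Df C) = limsup_at (preimage f C) xb (h2 f Df C)).
  { apply limsup_ext. intros x Cx. apply Rbar_le_antisym; [apply h1_le_h2|apply h2_le_h1; auto]. }
  assert (E23 : limsup_at (preimage f C) xb (h2 f Df C) = limsup_at (preimage f C) xb (h3 f Df C))
    by (apply limsup_ext; intros; apply h2_eq_h3).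
  split; [|split]; congruence.
Qed.
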